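(* Let $\left|\Omega\right\rangle=\frac{1}{\sqrt5}\big(|000\rangle+|011\rangle+|101\rangle+|110\rangle+|111\rangle\big)$ be a three-qubit state (parties $A,B,C$), and let $\rho_C=\mathrm{Tr}_{AB}\left|\Omega\right\rangle\left\langle\Omega\right|$. Then $$E_{MB}(\left|\Omega\right\rangle)=E_R(\left|\Omega\right\rangle)=E_{Hmin}(\left|\Omega\right\rangle)=S(\rho_C)=H_2\!\Big[\tfrac12\big(1+\tfrac1{\sqrt5}\big)\Big]\approx0.8505,$$ where $H_2(x)=-x\log_2x-(1-x)\log_2(1-x)$.
   Context: Entanglement measurement bound (EMB). Let $\left|\psi\right\rangle$ be a unit vector in $\mathcal{H}_1\otimes\cdots\otimes\mathcal{H}_N$, $\mathcal{H}_j=\mathbb{C}^{d_j}$. An adaptive local measurement scheme consists of: an ordering $\pi$ of the parties $\{1,\dots,N\}$; an orthonormal basis $\{|\phi^{(1)}_{i_1}\rangle\}_{i_1}$ of $\mathcal{H}_{\pi(1)}$; and, for each $k=2,\dots,N$ and each outcome history $(i_1,\dots,i_{k-1})$, an orthonormal basis $\{|\phi^{(k)}_{i_k|i_1\dots i_{k-1}}\rangle\}_{i_k}$ of $\mathcal{H}_{\pi(k)}$ (which may depend on the history). Its outcome distribution is $p_{i_1\dots i_N}=\big|\big(\langle\phi^{(1)}_{i_1}|\otimes\langle\phi^{(2)}_{i_2|i_1}|\otimes\cdots\otimes\langle\phi^{(N)}_{i_N|i_1\dots i_{N-1}}|\big)\left|\psi\right\rangle\big|^2$, where the $k$-th bra acts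 on the tensor factor of party $\pi(k)$. The EMB is $E_{MB}(\left|\psi\right\rangle)=\min H(\mathbf{p})$, where $H(\mathbf{p})=-\sum p_{i_1\dots i_N}\log_2 p_{i_1\dots i_N}$ is the Shannon entropy and the minimum is over all adaptive local measurement schemes (including all orderings of the parties). Relative entropy of entanglement: $E_R(\left|\psi\right\rangle)=\min_{\sigma}\big(-\langle\psi|\log_2\sigma|\psi\rangle\big)$, the minimum over all fully separable three-qubit states $\sigma$ (convex combinations of product states $\sigma_A\otimes\sigma_B\otimes\sigma_C$). Minimal measurement entropy (non-adaptive): for a three-qubit pure state, $E_{Hmin}(\left|\psi\right\rangle)=\min\big(-\sum_{l,m=0}^1p'_{lm}\log_2p'_{lm}\big)$, where $p'_{lm}=\big\|(\langle\alpha_l|\otimes\langle\beta_m|\otimes I)\left|\psi\right\rangle\big\|^2$ and the minimum is over all orthonormal bases $\{|\alpha_0\rangle,|\alpha_1\rangle\}$ of party $A$'s qubit and $\{|\beta_0\rangle,|\beta_1\rangle\}$ of party $B$'s qubit (Bob's basis not depending on Alice's outcome). *)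

From Stdlib Require Import Reals List.
Import ListNotations.
Open Scope R_scope.

Record Cx := mkC { re : R ; im : R }.
Definition C0 : Cx := mkC 0 0.
Definition C1 : Cx := mkC 1 0.
Definition RtoC (r : R) : Cx := mkC r 0.
Definition Cadd (z w : Cx) : Cx := mkC (re z + re w) (im z + im w).
Definition Cmul (z w : Cx) : Cx :=
  mkC (re z * re w - im z * im w) (re z * im w + im z * re w).
Definition Cconj (z : Cx) : Cx := mkC (re z) (- im z).
Definition Cnorm2 (z : Cx) : R := re z * re z + im z * im z.

Definition sumC {I : Type} (l : list I) (f : I -> Cx) : Cx :=
  fold_right (fun i acc => Cadd (f i) acc) C0 l.
Definition sumR {I : Type} (l : list I) (f : I -> R) : R :=
  fold_right (fun i acc => f i + acc) 0 l.

(* computational basis of a qubit C^2 : {0,1} = bool (false = 0, true = 1) *)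
Definition enumB : list bool := [false; true].
(* computational basis of three qubits (A,B,C) *)
Definition Idx3 := (bool * bool * bool)%type.
Definition enum3 : list Idx3 :=
  flat_map (fun a => flat_map (fun b => map (fun c => (a, b, c)) enumB) enumB) enumB.
Definition eqb3 (x y : Idx3) : bool :=
  match x, y with
  | (a, b, c), (a', b', c') => Bool.eqb a a' && Bool.eqb b b' && Bool.eqb c c'
  end.

Definition inner {I : Type} (l : list I) (u v : I -> Cx) : Cx :=
  sumC l (fun x => Cmul (Cconj (u x)) (v x)).

(* e : K -> (vector indexed by I) is an orthonormal family indexed by l *)
Definition orthonormal {I : Type} (l : list I) (eqb : I -> I -> bool)
    (e : I -> I -> Cx) : Prop :=
  forall i j, inner l (e i) (e j) = if eqb i j then C1 else C0.

Definition qubit_ONB (e : bool -> bool -> Cx) : Prop := orthonormal enumB Bool.eqb e.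
Definition ONB3 (e : Idx3 -> Idx3 -> Cx) : Prop := orthonormal enum3 eqb3 e.

Definition log2 (x : R) : R := ln x / ln 2.
Definition hterm (p : R) : R := if Req_dec_T p 0 then 0 else - p * log2 p.
Definition H2 (x : R) : R := hterm x + hterm (1 - x).

Definition State3 := bool -> bool -> bool -> Cx.
Definition vec3 (psi : State3) : Idx3 -> Cx :=
  fun x => match x with (a, b, c) => psi a b c end.

Definition Omega : State3 := fun a b c =>
  match a, b, c with
  | false, false, false | false, true, true | true, false, true
  | true, true, false | true, true, true => RtoC (/ sqrt 5)
  | _, _, _ => C0
  end.

Inductive Party := PA | PB | PC.
Definition party_eqb (p q : Party) : bool :=
  match p, q with PA, PA | PB, PB | PC, PC => true | _, _ => false end.

Record Scheme := mkScheme {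
  ord1 : Party; ord2 : Party; ord3 : Party;
  ph1 : bool -> bool -> Cx;
  ph2 : bool -> bool -> bool -> Cx;                  (* i1 -> |phi^(2)_{i2|i1}> *)
  ph3 : bool -> bool -> bool -> bool -> Cx           (* i1 -> i2 -> |phi^(3)_{i3|i1 i2}> *)
}.

Definition valid_scheme (S : Scheme) : Prop :=
  ord1 S <> ord2 S /\ ord1 S <> ord3 S /\ ord2 S <> ord3 S /\
  qubit_ONB (ph1 S) /\
  (forall i1, qubit_ONB (ph2 S i1)) /\
  (forall i1 i2, qubit_ONB (ph3 S i1 i2)).

(* value of the computational index of party p, given the indices y1,y2,y3
   of the parties pi(1),pi(2),pi(3) *)
Definition assign (S : Scheme) (y1 y2 y3 : bool) (p : Party) : bool :=
  if party_eqb p (ord1 S) then y1 else if party_eqb p (ord2 S) then y2 else y3.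

Definition scheme_amp (S : Scheme) (psi : State3) (i1 i2 i3 : bool) : Cx :=
  sumC enumB (fun y1 => sumC enumB (fun y2 => sumC enumB (fun y3 =>
    Cmul (Cmul (Cmul (Cconj (ph1 S i1 y1)) (Cconj (ph2 S i1 i2 y2)))
               (Cconj (ph3 S i1 i2 i3 y3)))
         (psi (assign S y1 y2 y3 PA) (assign S y1 y2 y3 PB) (assign S y1 y2 y3 PC))))).

Definition scheme_prob (S : Scheme) (psi : State3) (i1 i2 i3 : bool) : R :=
  Cnorm2 (scheme_amp S psi i1 i2 i3).

Definition scheme_entropy (S : Scheme) (psi : State3) : R :=
  sumR enumB (fun i1 => sumR enumB (fun i2 => sumR enumB (fun i3 =>
    hterm (scheme_prob S psi i1 i2 i3)))).

Definition IsEMB (psi : State3) (v : R) : Prop :=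
  (exists S, valid_scheme S /\ scheme_entropy S psi = v) /\
  (forall S, valid_scheme S -> v <= scheme_entropy S psi).

Definition hmin_prob (al be : bool -> bool -> Cx) (psi : State3) (l m : bool) : R :=
  sumR enumB (fun c =>
    Cnorm2 (sumC enumB (fun a => sumC enumB (fun b =>
      Cmul (Cmul (Cconj (al l a)) (Cconj (be m b))) (psi a b c))))).

Definition hmin_entropy (al be : bool -> bool -> Cx) (psi : State3) : R :=
  sumR enumB (fun l => sumR enumB (fun m => hterm (hmin_prob al be psi l m))).

Definition IsEHmin (psi : State3) (v : R) : Prop :=
  (exists al be, qubit_ONB al /\ qubit_ONB be /\ hmin_entropy al be psi = v) /\
  (forall al be, qubit_ONB al -> qubit_ONB be -> v <= hmin_entropy al be psi).

Definition rhoC (psi : State3) (c c' : bool) : Cx :=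
  sumC enumB (fun a => sumC enumB (fun b => Cmul (psi a b c) (Cconj (psi a b c')))).

Definition spectral2 (M : bool -> bool -> Cx) (e : bool -> bool -> Cx) (lam : bool -> R) : Prop :=
  qubit_ONB e /\
  forall i j, M i j = sumC enumB (fun k => Cmul (RtoC (lam k)) (Cmul (e k i) (Cconj (e k j)))).

(* S(rho) = -Tr rho log2 rho = H(eigenvalues) *)
Definition IsVNEntropyC (psi : State3) (v : R) : Prop :=
  (exists e lam, spectral2 (rhoC psi) e lam) /\
  (forall e lam, spectral2 (rhoC psi) e lam -> sumR enumB (fun k => hterm (lam k)) = v).

Definition Mat2 := bool -> bool -> Cx.
Definition Mat8 := Idx3 -> Idx3 -> Cx.

Definition density2 (M : Mat2) : Prop :=
  (forall i j, M j i = Cconj (M i j)) /\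
  (forall v : bool -> Cx,
      0 <= re (sumC enumB (fun i => sumC enumB (fun j =>
                 Cmul (Cmul (Cconj (v i)) (M i j)) (v j))))) /\
  sumC enumB (fun i => M i i) = C1.

Definition prod_state (sA sB sC : Mat2) : Mat8 := fun x y =>
  match x, y with
  | (a, b, c), (a', b', c') => Cmul (Cmul (sA a a') (sB b b')) (sC c c')
  end.

Definition fully_separable (s : Mat8) : Prop :=
  exists L : list (R * (Mat2 * Mat2 * Mat2)),
    Forall (fun t => match t with (w, (sA, sB, sC)) =>
               0 <= w /\ density2 sA /\ density2 sB /\ density2 sC end) L /\
    sumR L (fun t => fst t) = 1 /\
    forall x y, s x y = sumC L (fun t => match t with (w, (sA, sB, sC)) =>
                          Cmul (RtoC w) (prod_state sA sB sC x y) end).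

Definition spectral8 (M : Mat8) (e : Idx3 -> Idx3 -> Cx) (lam : Idx3 -> R) : Prop :=
  ONB3 e /\
  forall i j, M i j = sumC enum3 (fun k => Cmul (RtoC (lam k)) (Cmul (e k i) (Cconj (e k j)))).

Definition ovl (psi : State3) (e : Idx3 -> Idx3 -> Cx) (k : Idx3) : R :=
  Cnorm2 (inner enum3 (e k) (vec3 psi)).

(* -<psi| log2 sigma |psi> is finite iff psi is supported on the range of sigma *)
Definition finite_relent (psi : State3) (e : Idx3 -> Idx3 -> Cx) (lam : Idx3 -> R) : Prop :=
  forall k, ovl psi e k <> 0 -> 0 < lam k.

(* -<psi| log2 sigma |psi> = - sum_k |<e_k|psi>|^2 log2 lam_k  (terms with zero overlap dropped) *)
Definition relent_val (psi : State3) (e : Idx3 -> Idx3 -> Cx) (lam : Idx3 -> R) : R :=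
  sumR enum3 (fun k => if Req_dec_T (ovl psi e k) 0 then 0
                       else - ovl psi e k * log2 (lam k)).

(* E_R(psi) = v : minimum over fully separable sigma of -<psi|log2 sigma|psi>
   (sigma for which this is +infinity are automatically >= v) *)
Definition IsER (psi : State3) (v : R) : Prop :=
  (exists s e lam, fully_separable s /\ spectral8 s e lam /\
                   finite_relent psi e lam /\ relent_val psi e lam = v) /\
  (forall s e lam, fully_separable s -> spectral8 s e lam ->
                   finite_relent psi e lam -> v <= relent_val psi e lam).

From Pilot Require Import Defs.
From Stdlib Require Import Reals Lra Psatz List Morphisms Setoid.
From mathcomp Require ssreflect ssrfun ssrbool eqtype ssrnat seq fintype bigop ssralg matrix Rstruct complex.
From Coquelicot Require Coquelicot.
Import ListNotations.
Open Scope R_scope.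

(** Key observation: with [m± = (1 ± 1/√5)/2] and the qubit basis
    [|c+> = √m- |0> + √m+ |1>], [|c-> = √m+ |0> - √m- |1>], the state has the
    generalized GHZ form [Ω = √m+ |c+c+c+> + √m- |c-c-c->].  All four
    quantities equal [H2(m+)]:
    - E_MB and E_Hmin: measuring A then B (even adaptively) yields outcome
      probabilities [m+ x y + m- x' y'] whose weights are doubly stochastic,
      so by concavity their entropy is at least [H2(m+)]; the third
      measurement only refines outcomes.  Measuring in [{c+, c-}] attains it.
    - S(rho_C): rho_C has trace 1 and [Tr rho_C^2 = 3/5], forcing eigenvalues [m±].
    - E_R: [sigma* = m+ |c+c+c+><..| + m- |c-c-c-><..|] attains [H2(m+)].  For
      the lower bound, a separable [sigma] satisfies [sigma <= I_AB (x) sigma_C];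
      the variational formula for resolvents gives
      [<Ω|(I (x) sigma_C + t)^-1|Ω> <= <Ω|(sigma + t)^-1|Ω>] for all [t > 0];
      integrating in [t] compares [-<Ω|log|Ω>] of both operators, and the
      latter is a cross-entropy bounded below (Gibbs, majorization) by [H2(m+)].
    - The numerical value follows from enclosures of logarithms by the atanh series. *)

Lemma Cx_ext z w : re z = re w -> im z = im w -> z = w.
Proof. destruct z, w; simpl; intros -> ->; reflexivity. Qed.

Ltac cunf := unfold sumC, sumR, inner, Cnorm2, Cmul, Cadd, Cconj, RtoC, Defs.C0, Defs.C1, enumB in *;
             simpl in *.
Ltac cxring := apply Cx_ext; cunf; ring.

Lemma Cnorm2_nonneg z : 0 <= Cnorm2 z.
Proof. unfold Cnorm2; nra. Qed.

Lemma Cnorm2_mul z w : Cnorm2 (Cmul z w) = Cnorm2 z * Cnorm2 w.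
Proof. cunf; ring. Qed.

Lemma Cnorm2_RtoC r : Cnorm2 (RtoC r) = r * r.
Proof. cunf; ring. Qed.

Lemma re_RtoC_mul r z : re (Cmul (RtoC r) z) = r * re z.
Proof. cunf; ring. Qed.

Lemma sumR_ext {I} (l : list I) f g : (forall i, f i = g i) -> sumR l f = sumR l g.
Proof. intros H; induction l; simpl; auto. rewrite H, IHl; reflexivity. Qed.
Lemma sumC_ext {I} (l : list I) f g : (forall i, f i = g i) -> sumC l f = sumC l g.
Proof. intros H; induction l; simpl; auto. rewrite H, IHl; reflexivity. Qed.

#[export] Instance sumC_proper {I} (l : list I) :
  Proper (pointwise_relation I eq ==> eq) (sumC l).
Proof. intros f g H. apply sumC_ext. exact H. Qed.
#[export] Instance sumR_proper {I} (l : list I) :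
  Proper (pointwise_relation I eq ==> eq) (sumR l).
Proof. intros f g H. apply sumR_ext. exact H. Qed.

Lemma sumC_ext_in {I} (l : list I) f g : (forall i, In i l -> f i = g i) -> sumC l f = sumC l g.
Proof.
  induction l; intros H; simpl; auto.
  rewrite (H a (or_introl eq_refl)), IHl by (intros; apply H; right; assumption).
  reflexivity.
Qed.

Lemma re_sumC {I} (l : list I) f : re (sumC l f) = sumR l (fun i => re (f i)).
Proof. induction l; simpl; auto. rewrite IHl; reflexivity. Qed.

Lemma sumR_add {I} (l : list I) f g : sumR l (fun i => f i + g i) = sumR l f + sumR l g.
Proof. induction l; simpl; try ring. rewrite IHl; ring. Qed.
Lemma sumR_scal {I} (l : list I) c f : sumR l (fun i => c * f i) = c * sumR l f.
Proof. induction l; simpl; try ring. rewrite IHl; ring. Qed.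
Lemma sumR_scal_r {I} (l : list I) c f : sumR l (fun i => f i * c) = sumR l f * c.
Proof. induction l; simpl; try ring. rewrite IHl; ring. Qed.
Lemma sumR_opp {I} (l : list I) f : sumR l (fun i => - f i) = - sumR l f.
Proof. induction l; simpl; try ring. rewrite IHl; ring. Qed.
Lemma sumR_le_in {I} (l : list I) f g :
  (forall i, In i l -> f i <= g i) -> sumR l f <= sumR l g.
Proof.
  induction l; intros H; simpl; [lra|].
  assert (f a <= g a) by (apply H; left; auto).
  assert (sumR l f <= sumR l g) by (apply IHl; intros; apply H; right; auto). lra.
Qed.
Lemma sumR_nonneg_in {I} (l : list I) f : (forall i, In i l -> 0 <= f i) -> 0 <= sumR l f.
Proof.
  induction l; intros H; simpl; [lra|].
  assert (0 <= f a) by (apply H; left; auto).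
  assert (0 <= sumR l f) by (apply IHl; intros; apply H; right; auto). lra.
Qed.
Lemma sumR_le {I} (l : list I) f g : (forall i, f i <= g i) -> sumR l f <= sumR l g.
Proof. intros H. apply sumR_le_in; auto. Qed.
Lemma sumR_nonneg {I} (l : list I) f : (forall i, 0 <= f i) -> 0 <= sumR l f.
Proof. intros H. apply sumR_nonneg_in; auto. Qed.

Lemma sumR_swap {I J} (l1 : list I) (l2 : list J) F :
  sumR l1 (fun i => sumR l2 (fun j => F i j)) = sumR l2 (fun j => sumR l1 (fun i => F i j)).
Proof.
  induction l1; simpl. { induction l2; simpl; [reflexivity | rewrite <- IHl2; ring]. }
  rewrite IHl1, <- sumR_add; reflexivity.
Qed.

Lemma sumC_add {I} (l : list I) f g :
  sumC l (fun i => Cadd (f i) (g i)) = Cadd (sumC l f) (sumC l g).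
Proof. induction l; simpl. cxring. rewrite IHl. cxring. Qed.
Lemma sumC_scal_l {I} (l : list I) c f : sumC l (fun i => Cmul c (f i)) = Cmul c (sumC l f).
Proof. induction l; simpl. cxring. rewrite IHl. generalize (sumC l f); intros. cxring. Qed.
Lemma sumC_scal_r {I} (l : list I) c f : sumC l (fun i => Cmul (f i) c) = Cmul (sumC l f) c.
Proof. induction l; simpl. cxring. rewrite IHl. generalize (sumC l f); intros. cxring. Qed.
Lemma sumC_conj {I} (l : list I) f : Cconj (sumC l f) = sumC l (fun i => Cconj (f i)).
Proof. induction l; simpl. cxring. rewrite <- IHl. generalize (sumC l f); intros. cxring. Qed.
Lemma sumC_zero {I} (l : list I) : sumC l (fun _ => Defs.C0) = Defs.C0.
Proof. induction l; simpl. reflexivity. rewrite IHl. cxring. Qed.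
Lemma sumC_swap {I J} (l1 : list I) (l2 : list J) F :
  sumC l1 (fun i => sumC l2 (fun j => F i j)) = sumC l2 (fun j => sumC l1 (fun i => F i j)).
Proof.
  induction l1; simpl. rewrite sumC_zero; auto.
  rewrite IHl1, <- sumC_add; reflexivity.
Qed.
Lemma sumC_mul {I J} (l1 : list I) (l2 : list J) f g :
  Cmul (sumC l1 f) (sumC l2 g) = sumC l1 (fun i => sumC l2 (fun j => Cmul (f i) (g j))).
Proof. rewrite <- sumC_scal_r. apply sumC_ext; intros i. rewrite sumC_scal_l. reflexivity. Qed.

Lemma sumR_enumB f : sumR enumB f = f false + f true.
Proof. simpl; ring. Qed.
Lemma sumC_enumB f : sumC enumB f = Cadd (f false) (f true).
Proof. cxring. Qed.
Lemma sumR_enum3 f : sumR enum3 f =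
  sumR enumB (fun a => sumR enumB (fun b => sumR enumB (fun c => f (a, b, c)))).
Proof. simpl; ring. Qed.
Lemma sumC_enum3 f : sumC enum3 f =
  sumC enumB (fun a => sumC enumB (fun b => sumC enumB (fun c => f (a, b, c)))).
Proof. apply Cx_ext; simpl; ring. Qed.

Definition enumerates {I} (l : list I) (eqb : I -> I -> bool) : Prop :=
  NoDup l /\ (forall x, In x l) /\ (forall x y, eqb x y = true <-> x = y).

Lemma enumB_enumerates : enumerates enumB Bool.eqb.
Proof.
  split; [| split].
  - repeat constructor; simpl; intuition discriminate.
  - intros []; simpl; auto.
  - intros x y; split; [apply Bool.eqb_prop | intros ->; apply Bool.eqb_reflx].
Qed.

Lemma enum3_enumerates : enumerates enum3 eqb3.
Proof.
  split; [| split].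
  - repeat constructor; simpl; intuition discriminate.
  - intros [[[] []] []]; simpl; tauto.
  - intros [[a b] c] [[a' b'] c']; simpl.
    rewrite !Bool.andb_true_iff, !Bool.eqb_true_iff.
    split; [intros [[-> ->] ->] | intros E; inversion E]; auto.
Qed.

Lemma sumC_delta {I} (l : list I) eqb (g : I -> Cx) x :
  enumerates l eqb -> sumC l (fun y => Cmul (g y) (if eqb x y then Defs.C1 else Defs.C0)) = g x.
Proof.
  intros [Hnd [Hin Heq]]. specialize (Hin x).
  assert (Away : forall l', ~ In x l' ->
            sumC l' (fun y => Cmul (g y) (if eqb x y then Defs.C1 else Defs.C0)) = Defs.C0).
  { induction l' as [|a l' IH]; intros Hx; simpl; [reflexivity|].
    destruct (eqb x a) eqn:E.
    - apply Heq in E. subst a. exfalso; apply Hx; left; reflexivity.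
    - rewrite IH by (intros H; apply Hx; right; exact H). cxring. }
  induction Hnd as [|a l Ha Hnd IH]; [contradiction|].
  simpl. destruct (eqb x a) eqn:E.
  - apply Heq in E; subst a. rewrite Away by exact Ha. cxring.
  - destruct Hin as [-> | Hin].
    + assert (eqb x x = true) by (apply Heq; reflexivity). congruence.
    + rewrite IH by exact Hin. cxring.
Qed.

(** Orthonormal families indexed by an enumeration are complete: a square
    matrix with a left inverse also has it as right inverse.  This is the one
    place where matrix algebra is needed. *)
Definition complete {I} (l : list I) (eqb : I -> I -> bool) (e : I -> I -> Cx) : Prop :=
  forall x y, sumC l (fun k => Cmul (e k x) (Cconj (e k y))) = if eqb x y then Defs.C1 else Defs.C0.

Module OrthonormalCompleteness.
Import ssreflect ssrfun ssrbool eqtype ssrnat seq fintype bigop ssralg matrix Rstruct complex.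
Import GRing.Theory.
Local Open Scope ring_scope.

Definition toC (z : Cx) : R[i] := Complex (re z) (im z).

Lemma toC_inj z w : toC z = toC w -> z = w.
Proof. by case: z => a b; case: w => c d /= [-> ->]. Qed.

Lemma toC_delta (b : bool) : toC (if b then Defs.C1 else Defs.C0) = b%:R.
Proof. by case: b. Qed.

Lemma toC_sumC {I} (d : I) (l : list I) (g : I -> Cx) :
  toC (sumC l g) = \sum_(i < size l) toC (g (nth d l i)).
Proof.
elim: l => [|a l IH]; first by rewrite big_ord0.
by rewrite big_ord_recl /= -IH.
Qed.

Lemma nth_surj {I} (d : I) (l : list I) x : List.In x l -> exists i : 'I_(size l), x = nth d l i.
Proof.
elim: l => [|a l IH] //= [-> | /IH [i ->]].
- by exists ord0.
- by exists (lift ord0 i).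
Qed.

Lemma nth_inj {I} (d : I) (l : list I) : List.NoDup l ->
  forall i j : 'I_(size l), nth d l i = nth d l j -> i = j.
Proof.
elim: l => [|a l IH] Hnd; first by case.
inversion Hnd as [|? ? Ha Hnd']; subst.
have mem_nth (k : 'I_(size l)) : List.In (nth d l k) l.
  by elim: l {IH Hnd Hnd' Ha} k => [|b l IHl] [[|k] Hk] //=; [left | right; apply: (IHl (Ordinal _))].
move=> i j; case: (unliftP ord0 i) => [i'|] ->; case: (unliftP ord0 j) => [j'|] -> //=.
- by move=> /(IH Hnd') ->.
- by move=> E; case: Ha; rewrite -E; apply: mem_nth.
- by move=> E; case: Ha; rewrite E; apply: mem_nth.
Qed.

Lemma orthonormal_complete_mx {I} (l : list I) eqb (e : I -> I -> Cx) :
  enumerates l eqb -> orthonormal l eqb e -> complete l eqb e.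
Proof.
move=> [Hnd [Hin Heq]] He x y.
case: l Hnd Hin He => [|d l0] Hnd Hin He; first by case: (Hin x).
set l := d :: l0 in Hnd Hin He *; set n := size l; set f := fun i : 'I_n => nth d l i.
have f_eqb (i j : 'I_n) : eqb (f i) (f j) = (i == j).
  apply/idP/eqP => [/Heq /(nth_inj d l Hnd) // | ->]; exact/Heq.
set A : 'M[R[i]]_n := \matrix_(i, j) toC (Cconj (e (f i) (f j))).
set B : 'M[R[i]]_n := \matrix_(i, j) toC (e (f j) (f i)).
have AB : A *m B = 1%:M.
  apply/matrixP => i j; rewrite !mxE -f_eqb -toC_delta -He /inner (toC_sumC d).
  by apply: eq_bigr => k _; rewrite !mxE.
have /matrixP BA := mulmx1C AB.
have [i ->] := nth_surj d l x (Hin x); have [j ->] := nth_surj d l y (Hin y).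
apply: toC_inj; rewrite (toC_sumC d) toC_delta -/(f i) -/(f j) f_eqb.
by move: (BA i j); rewrite !mxE => <-; apply: eq_bigr => k _; rewrite !mxE.
Qed.
End OrthonormalCompleteness.

Lemma orthonormal_complete {I} (l : list I) eqb e :
  enumerates l eqb -> orthonormal l eqb e -> complete l eqb e.
Proof. exact (OrthonormalCompleteness.orthonormal_complete_mx l eqb e). Qed.

Section Parseval.
Context {I : Type} (l : list I) (eqb : I -> I -> bool) (e : I -> I -> Cx).
Hypothesis (Hl : enumerates l eqb) (He : complete l eqb e).

Lemma parseval v w :
  sumC l (fun k => Cmul (Cconj (inner l (e k) v)) (inner l (e k) w)) = inner l v w.
Proof.
  unfold inner. setoid_rewrite sumC_conj. setoid_rewrite sumC_mul.
  rewrite sumC_swap. apply sumC_ext; intros x. rewrite sumC_swap.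
  transitivity (sumC l (fun y => Cmul (Cmul (Cconj (v x)) (w y))
      (sumC l (fun k => Cmul (e k x) (Cconj (e k y)))))).
  - apply sumC_ext; intros y. rewrite <- sumC_scal_l. apply sumC_ext; intros k. cxring.
  - setoid_rewrite He. rewrite (sumC_delta l eqb (fun y => Cmul (Cconj (v x)) (w y))) by exact Hl.
    reflexivity.
Qed.

Lemma parseval_norm v :
  sumR l (fun k => Cnorm2 (inner l (e k) v)) = sumR l (fun x => Cnorm2 (v x)).
Proof.
  transitivity (re (sumC l (fun k => Cmul (Cconj (inner l (e k) v)) (inner l (e k) v)))).
  - rewrite re_sumC. apply sumR_ext; intros; cunf; ring.
  - rewrite parseval. unfold inner. rewrite re_sumC. apply sumR_ext; intros; cunf; ring.
Qed.
End Parseval.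

(** Entropy terms.  We work with the natural-log term [hl p = - p ln p] and
    convert to base 2 at the end, since [hterm p = hl p / ln 2]. *)

Lemma ln_le_x1 x : 0 < x -> ln x <= x - 1.
Proof. intros Hx. pose proof (exp_ineq1_le (ln x)). rewrite exp_ln in H by lra. lra. Qed.

Lemma ln_le_mono x y : 0 < x -> x <= y -> ln x <= ln y.
Proof.
  intros Hx Hxy. destruct (Req_dec x y) as [->|]; [lra|].
  left; apply ln_increasing; lra.
Qed.

Lemma ln_div x y : 0 < x -> 0 < y -> ln (x / y) = ln x - ln y.
Proof. intros. unfold Rdiv. rewrite ln_mult, ln_Rinv by (try apply Rinv_0_lt_compat; lra). ring. Qed.

Lemma ln2_pos : 0 < ln 2.
Proof. rewrite <- ln_1. apply ln_increasing; lra. Qed.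

Definition hl (p : R) : R := if Req_dec_T p 0 then 0 else - p * ln p.

Lemma hl_0 : hl 0 = 0.
Proof. unfold hl; destruct (Req_dec_T 0 0); lra. Qed.
Lemma hl_pos p : p <> 0 -> hl p = - p * ln p.
Proof. unfold hl; destruct (Req_dec_T p 0); lra. Qed.

Lemma hterm_hl p : hterm p = hl p / ln 2.
Proof.
  unfold hterm, hl, log2. pose proof ln2_pos.
  destruct (Req_dec_T p 0); [unfold Rdiv; ring | field; lra].
Qed.

Lemma hterm_0 : hterm 0 = 0.
Proof. rewrite hterm_hl, hl_0; unfold Rdiv; ring. Qed.

Lemma hterm_of_hl a b c d : a * hl b + c * hl d <= hl (b * a + d * c) ->
  a * hterm b + c * hterm d <= hterm (b * a + d * c).
Proof.
  intros H. rewrite !hterm_hl. pose proof ln2_pos. unfold Rdiv.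
  replace (a * (hl b * / ln 2) + c * (hl d * / ln 2)) with ((a * hl b + c * hl d) * / ln 2) by ring.
  apply Rmult_le_compat_r; [left; apply Rinv_0_lt_compat|]; lra.
Qed.

Lemma hterm_sub x y : 0 <= x -> 0 <= y -> hterm (x + y) <= hterm x + hterm y.
Proof.
  intros Hx Hy. rewrite !hterm_hl. pose proof ln2_pos.
  assert (hl (x + y) <= hl x + hl y).
  { destruct (Req_dec x 0) as [->|]; [rewrite hl_0, Rplus_0_l; lra|].
    destruct (Req_dec y 0) as [->|]; [rewrite hl_0, Rplus_0_r; lra|].
    rewrite !hl_pos by lra.
    assert (ln x <= ln (x + y)) by (apply ln_le_mono; lra).
    assert (ln y <= ln (x + y)) by (apply ln_le_mono; lra).
    nra. }
  unfold Rdiv. rewrite <- Rmult_plus_distr_r.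
  apply Rmult_le_compat_r; [left; apply Rinv_0_lt_compat|]; lra.
Qed.

Lemma hl_conc m1 m2 a b : 0 < m1 -> 0 < m2 -> 0 <= a -> 0 <= b -> a + b <= 1 ->
  a * hl m1 + b * hl m2 <= hl (m1 * a + m2 * b).
Proof.
  intros H1 H2 Ha Hb Hab.
  destruct (Req_dec (m1 * a + m2 * b) 0) as [E|E].
  - assert (a = 0) by nra. assert (b = 0) by nra. subst.
    replace (m1 * 0 + m2 * 0) with 0 by ring. rewrite hl_0; lra.
  - set (q := m1 * a + m2 * b) in *.
    assert (Hq : 0 < q) by (unfold q in *; nra).
    rewrite !hl_pos by lra.
    assert (L1 : ln (q / m1) <= q / m1 - 1) by (apply ln_le_x1, Rdiv_lt_0_compat; lra).
    assert (L2 : ln (q / m2) <= q / m2 - 1) by (apply ln_le_x1, Rdiv_lt_0_compat; lra).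
    rewrite ln_div in L1, L2 by lra.
    assert (E1 : a * m1 * (ln q - ln m1) <= a * q - a * m1).
    { replace (a * q - a * m1) with (a * m1 * (q / m1 - 1)) by (field; lra).
      apply Rmult_le_compat_l; nra. }
    assert (E2 : b * m2 * (ln q - ln m2) <= b * q - b * m2).
    { replace (b * q - b * m2) with (b * m2 * (q / m2 - 1)) by (field; lra).
      apply Rmult_le_compat_l; nra. }
    assert (q * (a + b) <= q) by nra.
    assert (q = m1 * a + m2 * b) by reflexivity. nra.
Qed.

Lemma hterm_conc m1 m2 a b : 0 < m1 -> 0 < m2 -> 0 <= a -> 0 <= b -> a + b <= 1 ->
  a * hterm m1 + b * hterm m2 <= hterm (m1 * a + m2 * b).
Proof. intros. apply hterm_of_hl, hl_conc; assumption. Qed.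

Lemma gibbs_term p q : 0 <= p -> 0 < q -> p * ln q <= - hl p + (q - p).
Proof.
  intros Hp Hq. destruct (Req_dec p 0) as [->|Hp0]; [rewrite hl_0; lra|].
  rewrite hl_pos by exact Hp0.
  pose proof (ln_le_x1 (q / p) ltac:(apply Rdiv_lt_0_compat; lra)) as L.
  rewrite ln_div in L by lra.
  assert (E : p * (ln q - ln p) <= p * (q / p - 1)) by (apply Rmult_le_compat_l; lra).
  replace (p * (q / p - 1)) with (q - p) in E by (field; exact Hp0). lra.
Qed.

(** Shifting all eigenvalues by a large [T] moves a weighted log-sum by
    about [ln T]: bounds from above (with the mean [sum w lam]) and below. *)
Lemma log_sum_shift_upper {I} (l : list I) (w lam : I -> R) T :
  (forall k, 0 <= w k) -> (forall k, 0 <= lam k) -> sumR l w = 1 -> 0 < T ->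
  sumR l (fun k => w k * ln (lam k + T)) <= ln T + sumR l (fun k => w k * lam k) / T.
Proof.
  intros Hw Hl Sw HT.
  replace (ln T) with (sumR l (fun k => w k * ln T)) by (rewrite sumR_scal_r, Sw; ring).
  unfold Rdiv. rewrite <- sumR_scal_r, <- sumR_add. apply sumR_le; intros k.
  pose proof (Hw k); pose proof (Hl k).
  pose proof (ln_le_x1 ((lam k + T) / T) ltac:(apply Rdiv_lt_0_compat; lra)) as L.
  rewrite ln_div in L by lra.
  replace ((lam k + T) / T - 1) with (lam k * / T) in L by (field; lra).
  replace (w k * ln T + w k * lam k * / T) with (w k * (ln T + lam k * / T)) by ring.
  apply Rmult_le_compat_l; lra.
Qed.

Lemma log_sum_shift_lower {I} (l : list I) (w lam : I -> R) T :
  (forall k, 0 <= w k) -> (forall k, 0 <= lam k) -> sumR l w = 1 -> 0 < T ->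
  ln T <= sumR l (fun k => w k * ln (lam k + T)).
Proof.
  intros Hw Hl Sw HT.
  replace (ln T) with (sumR l (fun k => w k * ln T)) by (rewrite sumR_scal_r, Sw; ring).
  apply sumR_le; intros k. apply Rmult_le_compat_l; [apply Hw|].
  apply ln_le_mono; [| pose proof (Hl k)]; lra.
Qed.

Module Calculus.
Import Coquelicot.Coquelicot.

Lemma mono_deriv (f df : R -> R) a b : a <= b ->
  (forall x, a <= x <= b -> is_derive f x (df x)) ->
  (forall x, a <= x <= b -> 0 <= df x) -> f a <= f b.
Proof.
  intros Hab Hd Hp. destruct (Req_dec a b) as [->|]; [lra|].
  destruct (MVT_gen f a b df) as [c [Hc E]].
  - intros x Hx. rewrite Rmin_left, Rmax_right in Hx by lra. apply Hd; lra.
  - intros x Hx. rewrite Rmin_left, Rmax_right in Hx by lra. apply continuity_pt_filterlim.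
    apply (ex_derive_continuous (K := R_AbsRing) (V := R_NormedModule) f x).
    exists (df x). apply Hd; lra.
  - rewrite Rmin_left, Rmax_right in Hc by lra. specialize (Hp c Hc). nra.
Qed.

(** [ln((1+z)/(1-z)) = 2 atanh z] is squeezed between the degree-11 Taylor
    polynomial [atanh_poly z] and the same plus a geometric tail bound. *)
Definition atanh_poly (z : R) := 2 * (z + z^3/3 + z^5/5 + z^7/7 + z^9/9 + z^11/11).

Lemma atanh_poly_lower z : 0 <= z < 1 -> atanh_poly z <= ln (1 + z) - ln (1 - z).
Proof.
  intros Hz.
  assert (H := mono_deriv (fun x => ln (1 + x) - ln (1 - x) - atanh_poly x)
                          (fun x => 2 * x^12 / (1 - x^2)) 0 z).
  cbv beta in H. replace (ln (1 + 0) - ln (1 - 0) - atanh_poly 0) with 0 in H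
    by (unfold atanh_poly; rewrite Rplus_0_r, Rminus_0_r, ln_1; field).
  cut (0 <= ln (1 + z) - ln (1 - z) - atanh_poly z); [lra|].
  apply H; [lra| |].
  - intros x Hx. unfold atanh_poly. auto_derive; [lra|]. field. split; nra.
  - intros x Hx. apply Rmult_le_pos; [apply Rmult_le_pos; [lra | apply pow_le; lra]|].
    left; apply Rinv_0_lt_compat; nra.
Qed.

Lemma atanh_poly_upper z : 0 <= z < 1 ->
  ln (1 + z) - ln (1 - z) <= atanh_poly z + 2 * z^13 / (13 * (1 - z^2)).
Proof.
  intros Hz.
  assert (H := mono_deriv
    (fun x => 2 * x^13 / (13 * (1 - z^2)) - (ln (1 + x) - ln (1 - x) - atanh_poly x))
    (fun x => 2 * x^12 / (1 - z^2) - 2 * x^12 / (1 - x^2)) 0 z).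
  cbv beta in H.
  replace (2 * 0^13 / (13 * (1 - z^2)) - (ln (1 + 0) - ln (1 - 0) - atanh_poly 0)) with 0 in H
    by (unfold atanh_poly; rewrite Rplus_0_r, Rminus_0_r, ln_1; field; nra).
  cut (0 <= 2 * z^13 / (13 * (1 - z^2)) - (ln (1 + z) - ln (1 - z) - atanh_poly z)); [lra|].
  apply H; [lra| |].
  - intros x Hx. unfold atanh_poly. auto_derive; [lra|]. field. split; nra.
  - intros x Hx.
    assert (0 <= x^12) by (apply pow_le; lra).
    assert (0 < 1 - z^2) by nra. assert (1 - z^2 <= 1 - x^2) by nra.
    assert (/ (1 - x^2) <= / (1 - z^2)) by (apply Rinv_le_contravar; lra).
    unfold Rdiv. nra.
Qed.

Lemma is_derive_sumR {I} (l : list I) (F dF : I -> R -> R) t :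
  (forall i, is_derive (F i) t (dF i t)) ->
  is_derive (fun x => sumR l (fun i => F i x)) t (sumR l (fun i => dF i t)).
Proof.
  intros H. induction l as [|a l IH]; simpl.
  - apply (is_derive_const 0).
  - apply (is_derive_plus (F a) (fun x => sumR l (fun i => F i x))); [apply H | exact IH].
Qed.

Lemma is_derive_log_sum {I} (l : list I) (w lam : I -> R) t :
  (forall k, 0 <= lam k) -> 0 < t ->
  is_derive (fun x => sumR l (fun k => w k * ln (lam k + x))) t
            (sumR l (fun k => w k / (lam k + t))).
Proof.
  intros Hl Ht. apply (is_derive_sumR l (fun k x => w k * ln (lam k + x)) (fun k x => w k / (lam k + x))).
  intros k. pose proof (Hl k). auto_derive; [lra | field; lra].
Qed.
(** If the weighted resolvents satisfy
    [sum_j p_j / (nu_j + t) <= sum_k o_k / (lam_k + t)] for all [t > 0], then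
    [Phi t = sum_k o_k ln(lam_k + t) - sum_j p_j ln(nu_j + t)] is
    nondecreasing and tends to at most [0] at infinity, so [Phi <= 0]. *)
Lemma log_comparison {I J} (l1 : list I) (l2 : list J) (o lam : I -> R) (p nu : J -> R) :
  (forall k, 0 <= o k) -> (forall k, 0 <= lam k) -> (forall j, 0 <= p j) -> (forall j, 0 <= nu j) ->
  sumR l1 o = 1 -> sumR l2 p = 1 ->
  (forall t, 0 < t -> sumR l2 (fun j => p j / (nu j + t)) <= sumR l1 (fun k => o k / (lam k + t))) ->
  forall t0, 0 < t0 ->
  sumR l1 (fun k => o k * ln (lam k + t0)) <= sumR l2 (fun j => p j * ln (nu j + t0)).
Proof.
  intros Ho Hl Hp Hn So Sp Hres t0 Ht0.
  set (Phi := fun x => sumR l1 (fun k => o k * ln (lam k + x)) - sumR l2 (fun j => p j * ln (nu j + x))).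
  assert (Mono : forall T, t0 <= T -> Phi t0 <= Phi T).
  { intros T HT.
    apply (mono_deriv Phi (fun x => sumR l1 (fun k => o k / (lam k + x))
                                  - sumR l2 (fun j => p j / (nu j + x)))); [exact HT | |].
    - intros x Hx. unfold Phi.
      apply (is_derive_minus (fun x => sumR l1 (fun k => o k * ln (lam k + x)))
                             (fun x => sumR l2 (fun j => p j * ln (nu j + x))));
        apply is_derive_log_sum; auto; lra.
    - intros x Hx. pose proof (Hres x ltac:(lra)). lra. }
  set (M := sumR l1 (fun k => o k * lam k)).
  assert (M0 : 0 <= M) by (apply sumR_nonneg; intros k; apply Rmult_le_pos; auto).
  assert (Decay : forall T, 0 < T -> Phi T <= M / T).
  { intros T HT. pose proof (log_sum_shift_upper l1 o lam T Ho Hl So HT).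
    pose proof (log_sum_shift_lower l2 p nu T Hp Hn Sp HT). unfold Phi, M. lra. }
  destruct (Rle_dec (Phi t0) 0) as [|Hgt]; [unfold Phi in *; lra|].
  exfalso. apply Rnot_le_lt in Hgt.
  set (T := t0 + M / Phi t0 + 1).
  assert (HM : 0 <= M / Phi t0) by (apply Rdiv_le_0_compat; lra).
  pose proof (Mono T ltac:(unfold T; lra)). pose proof (Decay T ltac:(unfold T; lra)).
  assert (M / T < Phi t0).
  { apply (Rmult_lt_reg_r T); [unfold T; lra|]. unfold Rdiv.
    rewrite Rmult_assoc, Rinv_l, Rmult_1_r by (unfold T; lra).
    unfold T. assert (M = Phi t0 * (M / Phi t0)) by (field; lra). nra. }
  lra.
Qed.
End Calculus.

Definition ov (u v : bool -> Cx) : R := Cnorm2 (inner enumB u v).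

Lemma ov_sym u v : ov u v = ov v u.
Proof. unfold ov; cunf; ring. Qed.

Lemma ov_nonneg u v : 0 <= ov u v.
Proof. apply Cnorm2_nonneg. Qed.

Lemma qubit_parseval f u : qubit_ONB f ->
  sumR enumB (fun i => ov (f i) u) = sumR enumB (fun a => Cnorm2 (u a)).
Proof.
  intros Hf. apply (parseval_norm enumB Bool.eqb f enumB_enumerates).
  exact (orthonormal_complete enumB Bool.eqb f enumB_enumerates Hf).
Qed.

Lemma onb_unit f i : qubit_ONB f -> sumR enumB (fun a => Cnorm2 (f i a)) = 1.
Proof.
  intros Hf. transitivity (re (inner enumB (f i) (f i))).
  - unfold inner. rewrite re_sumC. apply sumR_ext; intros; cunf; ring.
  - rewrite (Hf i i), Bool.eqb_reflx. reflexivity.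
Qed.

Definition qform {I} (l : list I) (M : I -> I -> Cx) (v : I -> Cx) : R :=
  re (sumC l (fun i => sumC l (fun j => Cmul (Cmul (Cconj (v i)) (M i j)) (v j)))).

Definition decomp {I} (l : list I) (M : I -> I -> Cx) (e : I -> I -> Cx) (lam : I -> R) : Prop :=
  forall i j, M i j = sumC l (fun k => Cmul (RtoC (lam k)) (Cmul (e k i) (Cconj (e k j)))).

Lemma qform_ext {I} (l : list I) M1 M2 v : (forall x y, M1 x y = M2 x y) ->
  qform l M1 v = qform l M2 v.
Proof. intros H. unfold qform. setoid_rewrite H. reflexivity. Qed.

Lemma qform_decomp {I} (l : list I) M e lam v : decomp l M e lam ->
  qform l M v = sumR l (fun k => lam k * Cnorm2 (inner l (e k) v)).
Proof.
  intros HM. unfold qform. setoid_rewrite HM.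
  transitivity (re (sumC l (fun k => Cmul (RtoC (lam k))
     (Cmul (Cconj (inner l (e k) v)) (inner l (e k) v))))).
  - f_equal. unfold inner. setoid_rewrite sumC_conj. setoid_rewrite sumC_mul.
    set (T := fun i j k => Cmul (RtoC (lam k))
                (Cmul (Cconj (Cmul (Cconj (e k i)) (v i))) (Cmul (Cconj (e k j)) (v j)))).
    transitivity (sumC l (fun i => sumC l (fun j => sumC l (fun k => T i j k)))).
    + apply sumC_ext; intros i; apply sumC_ext; intros j.
      rewrite <- sumC_scal_l, <- sumC_scal_r. apply sumC_ext; intros k. unfold T. cxring.
    + rewrite (sumC_ext l _ (fun i => sumC l (fun k => sumC l (fun j => T i j k))))
        by (intros i; apply sumC_swap).
      rewrite sumC_swap. apply sumC_ext; intros k. rewrite <- sumC_scal_l.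
      apply sumC_ext; intros i. rewrite <- sumC_scal_l. reflexivity.
  - rewrite re_sumC. apply sumR_ext; intros k. cunf. ring.
Qed.

Lemma enumerates_eqb_sym {I} (l : list I) eqb x y : enumerates l eqb -> eqb x y = eqb y x.
Proof.
  intros [_ [_ Heq]]. assert (R : forall a, eqb a a = true) by (intros; apply Heq; reflexivity).
  destruct (eqb x y) eqn:E, (eqb y x) eqn:F; try reflexivity;
    [apply Heq in E | apply Heq in F]; subst; congruence.
Qed.

Lemma qform_eigen {I} (l : list I) eqb M e lam k : enumerates l eqb -> orthonormal l eqb e ->
  decomp l M e lam -> qform l M (e k) = lam k.
Proof.
  intros Hl He HM. rewrite (qform_decomp l M e lam _ HM).
  transitivity (re (sumC l (fun j => Cmul (RtoC (lam j)) (if eqb k j then Defs.C1 else Defs.C0)))).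
  - rewrite re_sumC. apply sumR_ext; intros j.
    rewrite He, (enumerates_eqb_sym l eqb j k Hl). destruct (eqb k j); cunf; ring.
  - rewrite (sumC_delta l eqb (fun j => RtoC (lam j)) k Hl). reflexivity.
Qed.

Definition herm2 (M : Mat2) : Prop := forall i j, M j i = Cconj (M i j).

Lemma herm2_facts M : herm2 M ->
  im (M false false) = 0 /\ im (M true true) = 0 /\ M true false = Cconj (M false true).
Proof.
  intros H. pose proof (f_equal im (H false false)). pose proof (f_equal im (H true true)).
  simpl in *. split; [lra|]. split; [lra|]. apply H.
Qed.

Lemma scale_outer r a b :
  Cmul (Cmul (RtoC r) a) (Cconj (Cmul (RtoC r) b)) = Cmul (RtoC (r * r)) (Cmul a (Cconj b)).
Proof. cxring. Qed.

(** A Hermitian 2x2 matrix [[a, z], [z*, b]] with [z <> 0] has eigenvalues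
    [a + p], [a + q], where [p, q = (b - a ± D)/2] and
    [D = sqrt((a-b)^2 + 4|z|^2)], with eigenvectors proportional to [(z, p)]
    and [(z, q)]. *)
Lemma herm2_spectral_offdiag M : herm2 M -> 0 < Cnorm2 (M false true) ->
  exists c nu, qubit_ONB c /\ decomp enumB M c nu.
Proof.
  intros Hh Kp. destruct (herm2_facts M Hh) as [I0 [I1 H10]].
  set (a := re (M false false)) in *. set (b := re (M true true)) in *.
  set (z := M false true) in *. set (K := Cnorm2 z) in *.
  set (D := sqrt ((a - b) * (a - b) + 4 * K)).
  assert (S0 : 0 <= (a - b) * (a - b)) by (apply Rle_0_sqr).
  assert (DD : D * D = (a - b) * (a - b) + 4 * K) by (apply sqrt_sqrt; lra).
  assert (Dp : 0 < D) by (apply sqrt_lt_R0; lra).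
  set (p := (b - a + D) / 2). set (q := (b - a - D) / 2).
  assert (pq : p * q = - K) by (unfold p, q; nra).
  assert (Pp : 0 < p) by (unfold p; nra).
  assert (Qn : q < 0) by (unfold q; nra).
  set (Np := sqrt (p * D)). set (Nm := sqrt (- q * D)).
  assert (NpN : Np * Np = p * D) by (apply sqrt_sqrt; nra).
  assert (NmN : Nm * Nm = - q * D) by (apply sqrt_sqrt; nra).
  assert (KE : re z * re z - - im z * im z = K) by (unfold K, Cnorm2; ring).
  assert (KE' : re z * re z - im z * - im z = K) by (unfold K, Cnorm2; ring).
  set (u := fun k i : bool => if i then RtoC (if k then q else p) else z).
  exists (fun k i : bool => Cmul (RtoC (if k then / Nm else / Np)) (u k i)).
  exists (fun k : bool => if k then a + q else a + p). split.
  - intros k l. unfold inner.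
    rewrite (sumC_ext _ _ (fun x => Cmul (RtoC ((if k then / Nm else / Np) * (if l then / Nm else / Np)))
       (Cmul (Cconj (u k x)) (u l x)))) by (intros x; cxring).
    rewrite sumC_scal_l. unfold u.
    destruct k, l; simpl; apply Cx_ext; cunf; try ring;
      rewrite ?KE; replace K with (- (p * q)) by lra; try ring;
      rewrite <- Rinv_mult, ?NmN, ?NpN; unfold p, q; field; split; nra.
  - intros i j. rewrite sumC_enumB, !scale_outer, <- !Rinv_mult, NpN, NmN.
    destruct i, j; apply Cx_ext; unfold u; try rewrite H10; cunf;
      fold a b z; rewrite ?I0, ?I1, ?KE'; try ring;
      try (replace K with (- (p * q)) by lra); unfold p, q; field; split; nra.
Qed.

Lemma herm2_spectral M : herm2 M -> exists c nu, qubit_ONB c /\ decomp enumB M c nu.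
Proof.
  intros Hh. destruct (Req_dec (Cnorm2 (M false true)) 0) as [Z|Z].
  - destruct (herm2_facts M Hh) as [I0 [I1 H10]].
    unfold Cnorm2 in Z. assert (Zr : re (M false true) = 0) by nra.
    assert (Zi : im (M false true) = 0) by nra.
    exists (fun k i : bool => if Bool.eqb k i then Defs.C1 else Defs.C0).
    exists (fun k : bool => if k then re (M true true) else re (M false false)). split.
    + intros i j; destruct i, j; cxring.
    + intros i j; destruct i, j; apply Cx_ext; try rewrite H10; cunf; lra.
  - apply herm2_spectral_offdiag; [exact Hh | pose proof (Cnorm2_nonneg (M false true)); lra].
Qed.

Lemma density2_spectral M : density2 M ->
  exists c nu, qubit_ONB c /\ decomp enumB M c nu /\ (forall k, 0 <= nu k) /\
               nu false + nu true = 1.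
Proof.
  intros [Hh [Hpsd Htr]]. destruct (herm2_spectral M Hh) as [c [nu [Hc HM]]].
  exists c, nu. split; [exact Hc|]. split; [exact HM|]. split.
  - intros k. rewrite <- (qform_eigen enumB Bool.eqb M c nu k enumB_enumerates Hc HM). apply Hpsd.
  - transitivity (re (sumC enumB (fun i => M i i))); [|rewrite Htr; reflexivity].
    setoid_rewrite HM.
    transitivity (nu false * sumR enumB (fun a => Cnorm2 (c false a))
                  + nu true * sumR enumB (fun a => Cnorm2 (c true a))).
    + rewrite !onb_unit by exact Hc. ring.
    + cunf. ring.
Qed.

Lemma spectral2_power_sums M e lam : spectral2 M e lam ->
  re (Cadd (M false false) (M true true)) = lam false + lam true /\
  re (sumC enumB (fun i => sumC enumB (fun j => Cmul (M i j) (M j i)))) =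
    lam false * lam false + lam true * lam true.
Proof.
  intros [He HM]. split.
  - rewrite !HM.
    transitivity (lam false * sumR enumB (fun a => Cnorm2 (e false a))
                  + lam true * sumR enumB (fun a => Cnorm2 (e true a))).
    + cunf. ring.
    + rewrite !onb_unit by exact He. ring.
  - setoid_rewrite HM.
    transitivity (sumR enumB (fun k => sumR enumB (fun l =>
                    lam k * lam l * Cnorm2 (inner enumB (e k) (e l))))).
    + cunf. ring.
    + rewrite !sumR_enumB, !He. cunf. ring.
Qed.

Lemma qform_lin {I T} (l : list I) (L : list T) (w : T -> R) (M : T -> I -> I -> Cx) v :
  qform l (fun x y => sumC L (fun t => Cmul (RtoC (w t)) (M t x y))) v =
  sumR L (fun t => w t * qform l (M t) v).
Proof.
  transitivity (re (sumC L (fun t => Cmul (RtoC (w t)) (sumC l (fun i =>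
                  sumC l (fun j => Cmul (Cmul (Cconj (v i)) (M t i j)) (v j))))))).
  - unfold qform. f_equal. symmetry.
    rewrite (sumC_ext L _ (fun t => sumC l (fun i => Cmul (RtoC (w t))
               (sumC l (fun j => Cmul (Cmul (Cconj (v i)) (M t i j)) (v j))))))
      by (intros t; apply eq_sym, sumC_scal_l).
    rewrite sumC_swap. apply sumC_ext; intros i.
    rewrite (sumC_ext L _ (fun t => sumC l (fun j => Cmul (RtoC (w t))
               (Cmul (Cmul (Cconj (v i)) (M t i j)) (v j))))) by (intros t; apply eq_sym, sumC_scal_l).
    rewrite sumC_swap. apply sumC_ext; intros j.
    rewrite <- sumC_scal_l, <- sumC_scal_r. apply sumC_ext; intros t. cxring.
  - rewrite re_sumC. apply sumR_ext; intros t. apply re_RtoC_mul.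
Qed.

Definition tensor3 (f g h : bool -> bool -> Cx) (k x : Idx3) : Cx :=
  match k, x with (k1, k2, k3), (a, b, c) => Cmul (Cmul (f k1 a) (g k2 b)) (h k3 c) end.

Lemma inner_tensor3 f g h k1 k2 k3 v :
  inner enum3 (tensor3 f g h (k1, k2, k3)) v =
  inner enumB (f k1) (fun a => inner enumB (g k2) (fun b =>
    inner enumB (h k3) (fun c => v (a, b, c)))).
Proof. unfold inner. rewrite sumC_enum3. cxring. Qed.

Lemma tensor3_onb f g h : qubit_ONB f -> qubit_ONB g -> qubit_ONB h -> ONB3 (tensor3 f g h).
Proof.
  intros Hf Hg Hh [[k1 k2] k3] [[l1 l2] l3]. rewrite inner_tensor3. cbn [tensor3].
  transitivity (Cmul (Cmul (inner enumB (f k1) (f l1)) (inner enumB (g k2) (g l2)))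
                     (inner enumB (h k3) (h l3))); [cxring|].
  rewrite Hf, Hg, Hh. destruct k1, k2, k3, l1, l2, l3; simpl; cxring.
Qed.

Lemma prod_state_decomp A B C a b c (al be ga : bool -> R) :
  decomp enumB A a al -> decomp enumB B b be -> decomp enumB C c ga ->
  decomp enum3 (prod_state A B C) (tensor3 a b c)
    (fun k => match k with (k1, k2, k3) => al k1 * be k2 * ga k3 end).
Proof.
  intros HA HB HC [[x1 x2] x3] [[y1 y2] y3]. unfold prod_state. rewrite HA, HB, HC, sumC_enum3.
  cbn [tensor3]. cxring.
Qed.

Lemma tensor3_parseval a b c k3 v : qubit_ONB a -> qubit_ONB b ->
  sumR enumB (fun k1 => sumR enumB (fun k2 => Cnorm2 (inner enum3 (tensor3 a b c (k1, k2, k3)) v))) =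
  sumR enumB (fun x => sumR enumB (fun y => Cnorm2 (inner enumB (c k3) (fun z => v (x, y, z))))).
Proof.
  intros Ha Hb. setoid_rewrite inner_tensor3. rewrite sumR_swap.
  rewrite (sumR_ext _ _ (fun k2 => sumR enumB (fun x => Cnorm2 (inner enumB (b k2)
             (fun y => inner enumB (c k3) (fun z => v (x, y, z)))))))
    by (intros k2; apply (qubit_parseval a _ Ha)).
  rewrite sumR_swap.
  apply sumR_ext; intros x. exact (qubit_parseval b _ Hb).
Qed.

Lemma product_bounds A B C v : density2 A -> density2 B -> density2 C ->
  0 <= qform enum3 (prod_state A B C) v <=
  sumR enumB (fun x => sumR enumB (fun y => qform enumB C (fun z => v (x, y, z)))).
Proof.
  intros HA HB HC.
  destruct (density2_spectral A HA) as [a [al [Ha [DA [Hal Sal]]]]].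
  destruct (density2_spectral B HB) as [b [be [Hb [DB [Hbe Sbe]]]]].
  destruct (density2_spectral C HC) as [c [ga [Hc [DC [Hga Sga]]]]].
  rewrite (qform_decomp _ _ _ _ v (prod_state_decomp A B C a b c al be ga DA DB DC)).
  rewrite sumR_enum3. split.
  - repeat (apply sumR_nonneg; intros ?). apply Rmult_le_pos; [|apply Cnorm2_nonneg].
    repeat apply Rmult_le_pos; auto.
  - set (o := fun k1 k2 k3 => Cnorm2 (inner enum3 (tensor3 a b c (k1, k2, k3)) v)).
    assert (Hal1 : forall k, al k <= 1) by (intros []; pose proof (Hal false); pose proof (Hal true); lra).
    assert (Hbe1 : forall k, be k <= 1) by (intros []; pose proof (Hbe false); pose proof (Hbe true); lra).
    transitivity (sumR enumB (fun k1 => sumR enumB (fun k2 => sumR enumB (fun k3 =>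
                    ga k3 * o k1 k2 k3)))).
    + apply sumR_le; intros k1; apply sumR_le; intros k2; apply sumR_le; intros k3.
      pose proof (Hal k1); pose proof (Hbe k2); pose proof (Hal1 k1); pose proof (Hbe1 k2).
      pose proof (Hga k3). assert (0 <= o k1 k2 k3) by apply Cnorm2_nonneg.
      assert (0 <= (1 - al k1 * be k2) * (ga k3 * o k1 k2 k3)) by (apply Rmult_le_pos; nra).
      unfold o in *. lra.
    + right.
      setoid_rewrite (fun x y => qform_decomp enumB C c ga (fun z => v (x, y, z)) DC).
      transitivity (sumR enumB (fun k3 => ga k3 *
                      sumR enumB (fun k1 => sumR enumB (fun k2 => o k1 k2 k3)))).
      * rewrite !sumR_enumB. ring.
      * unfold o. setoid_rewrite (fun k3 => tensor3_parseval a b c k3 v Ha Hb).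
        rewrite !sumR_enumB. ring.
Qed.

Definition SepTerm := (R * (Mat2 * Mat2 * Mat2))%type.

Definition sep_weight_ok (t : SepTerm) : Prop :=
  match t with (w, (sA, sB, sC)) => 0 <= w /\ density2 sA /\ density2 sB /\ density2 sC end.

Definition sep_matrix (t : SepTerm) : Mat8 :=
  match t with (_, (sA, sB, sC)) => prod_state sA sB sC end.

Definition marginalC (L : list SepTerm) : Mat2 :=
  fun c c' => sumC L (fun t => Cmul (RtoC (fst t)) (snd (snd t) c c')).

Lemma sep_sum_form (L : list SepTerm) x y :
  sumC L (fun t => match t with (w, (sA, sB, sC)) => Cmul (RtoC w) (prod_state sA sB sC x y) end) =
  sumC L (fun t => Cmul (RtoC (fst t)) (sep_matrix t x y)).
Proof. apply sumC_ext; intros [w [[sA sB] sC]]; reflexivity. Qed.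

Lemma separable_bounds (L : list SepTerm) v : Forall sep_weight_ok L ->
  0 <= qform enum3 (fun x y => sumC L (fun t => Cmul (RtoC (fst t)) (sep_matrix t x y))) v <=
  sumR enumB (fun a => sumR enumB (fun b => qform enumB (marginalC L) (fun c => v (a, b, c)))).
Proof.
  intros HL. rewrite Forall_forall in HL. rewrite qform_lin.
  set (qC := fun (t : SepTerm) a b => qform enumB (snd (snd t)) (fun c => v (a, b, c))).
  assert (RHS : sumR enumB (fun a => sumR enumB (fun b => qform enumB (marginalC L) (fun c => v (a, b, c))))
                = sumR L (fun t => fst t * sumR enumB (fun a => sumR enumB (fun b => qC t a b)))).
  { transitivity (sumR enumB (fun a => sumR L (fun t => fst t * sumR enumB (fun b => qC t a b)))).
    - apply sumR_ext; intros a. rewrite (sumR_ext _ _ (fun b => sumR L (fun t => fst t * qC t a b)))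
        by (intros b; apply qform_lin).
      rewrite sumR_swap. apply sumR_ext; intros t. apply sumR_scal.
    - rewrite sumR_swap. apply sumR_ext; intros t. apply sumR_scal. }
  rewrite RHS. split.
  - apply sumR_nonneg_in; intros [w [[sA sB] sC]] Ht.
    destruct (HL _ Ht) as [Hw [HA [HB HC]]].
    apply Rmult_le_pos; [exact Hw | apply (product_bounds sA sB sC v HA HB HC)].
  - apply sumR_le_in; intros [w [[sA sB] sC]] Ht.
    destruct (HL _ Ht) as [Hw [HA [HB HC]]].
    apply Rmult_le_compat_l; [exact Hw | apply (product_bounds sA sB sC v HA HB HC)].
Qed.

Lemma marginalC_density (L : list SepTerm) : Forall sep_weight_ok L ->
  sumR L (fun t => fst t) = 1 -> density2 (marginalC L).
Proof.
  intros HL HW. rewrite Forall_forall in HL.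
  assert (Hdens : forall t, In t L -> 0 <= fst t /\ density2 (snd (snd t))).
  { intros [w [[sA sB] sC]] Ht. destruct (HL _ Ht) as [Hw [_ [_ HC]]]. auto. }
  split; [| split].
  - intros i j. unfold marginalC. rewrite sumC_conj. apply sumC_ext_in; intros t Ht.
    destruct (Hdens t Ht) as [_ [HC _]]. rewrite HC. cxring.
  - intros u. change (0 <= qform enumB (marginalC L) u). unfold marginalC. rewrite qform_lin.
    apply sumR_nonneg_in; intros t Ht. destruct (Hdens t Ht) as [Hw [_ [HC _]]].
    apply Rmult_le_pos; [exact Hw | apply HC].
  - unfold marginalC. rewrite sumC_swap.
    transitivity (sumC L (fun t => RtoC (fst t))).
    + apply sumC_ext_in; intros t Ht. destruct (Hdens t Ht) as [_ [_ [_ HC]]].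
      rewrite sumC_scal_l, HC. cxring.
    + apply Cx_ext; [rewrite re_sumC; exact HW|].
      clear. induction L; simpl in *; lra.
Qed.

(** Variational characterization of the resolvent:
    [<psi|(M + t)^-1|psi> = sup_v 2 Re <v|psi> - t |v|^2 - <v|M|v>]. *)

Lemma completing_square z w a : 0 < a -> 2 * re (Cmul (Cconj z) w) - a * Cnorm2 z <= Cnorm2 w / a.
Proof.
  intros Ha.
  assert (E : Cnorm2 w / a - (2 * re (Cmul (Cconj z) w) - a * Cnorm2 z) =
              Cnorm2 (Cadd w (Cmul (RtoC (- a)) z)) / a) by (cunf; field; lra).
  assert (0 <= Cnorm2 (Cadd w (Cmul (RtoC (- a)) z)) / a).
  { unfold Rdiv. apply Rmult_le_pos; [apply Cnorm2_nonneg | left; apply Rinv_0_lt_compat; lra]. }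
  lra.
Qed.

Lemma variational_bound {I} (l : list I) eqb e (s : I -> I -> Cx) lam psi v t :
  enumerates l eqb -> complete l eqb e -> decomp l s e lam -> (forall k, 0 <= lam k) -> 0 < t ->
  2 * re (inner l v psi) - t * sumR l (fun x => Cnorm2 (v x)) - qform l s v <=
  sumR l (fun k => Cnorm2 (inner l (e k) psi) / (lam k + t)).
Proof.
  intros Hl Hc Hs Hlam Ht.
  rewrite (qform_decomp l s e lam v Hs), <- (parseval_norm l eqb e Hl Hc v),
    <- (parseval l eqb e Hl Hc v psi), re_sumC.
  transitivity (sumR l (fun k => 2 * re (Cmul (Cconj (inner l (e k) v)) (inner l (e k) psi))
                                 - (lam k + t) * Cnorm2 (inner l (e k) v))).
  - right. rewrite <- sumR_scal, <- sumR_scal.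
    unfold Rminus. rewrite <- sumR_opp, <- sumR_opp, <- !sumR_add. apply sumR_ext; intros k. ring.
  - apply sumR_le; intros k. apply completing_square. pose proof (Hlam k). lra.
Qed.

Definition resolvent_vec (c : bool -> bool -> Cx) (nu : bool -> R) (t : R) (u : bool -> Cx) : bool -> Cx :=
  fun i => sumC enumB (fun j => Cmul (Cmul (RtoC (/ (nu j + t))) (inner enumB (c j) u)) (c j i)).

Lemma variational_attained M c nu u t :
  qubit_ONB c -> decomp enumB M c nu -> (forall k, 0 <= nu k) -> 0 < t ->
  let v := resolvent_vec c nu t u in
  2 * re (inner enumB v u) - t * sumR enumB (fun x => Cnorm2 (v x)) - qform enumB M v =
  sumR enumB (fun j => Cnorm2 (inner enumB (c j) u) / (nu j + t)).
Proof.
  intros Hc HM Hnu Ht v.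
  set (beta := fun j => Cmul (RtoC (/ (nu j + t))) (inner enumB (c j) u)).
  assert (Coord : forall k, inner enumB (c k) v = beta k).
  { intros k. transitivity (sumC enumB (fun j => Cmul (beta j) (inner enumB (c k) (c j)))).
    - unfold v, resolvent_vec. cxring.
    - setoid_rewrite (Hc k). destruct k; cxring. }
  assert (Norm : sumR enumB (fun x => Cnorm2 (v x)) = sumR enumB (fun j => Cnorm2 (beta j))).
  { rewrite <- (qubit_parseval c v Hc). apply sumR_ext; intros j. unfold ov. rewrite Coord. reflexivity. }
  assert (Inner : inner enumB v u = sumC enumB (fun j => Cmul (Cconj (beta j)) (inner enumB (c j) u))).
  { unfold v, resolvent_vec. cxring. }
  rewrite (qform_decomp enumB M c nu v HM), Norm, Inner. setoid_rewrite Coord.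
  unfold beta. rewrite !sumR_enumB, sumC_enumB.
  pose proof (Hnu false). pose proof (Hnu true).
  generalize (inner enumB (c false) u) (inner enumB (c true) u). intros w0 w1.
  cunf. field. lra.
Qed.

(** The constants: [m± = (1 ± 1/√5)/2] are the Schmidt weights of Ω,
    [r± = √m±] its Schmidt coefficients. *)

Definition s5 := / sqrt 5.
Definition mp := (1 + s5) / 2.
Definition mm := (1 - s5) / 2.
Definition rp := sqrt mp.
Definition rm := sqrt mm.

Lemma s5_sq : s5 * s5 = / 5.
Proof. unfold s5. rewrite <- Rinv_mult, sqrt_sqrt by lra. reflexivity. Qed.

Lemma s5_bounds : 0 < s5 < / 2.
Proof.
  assert (H5 : 0 < sqrt 5) by (apply sqrt_lt_R0; lra).
  assert (sqrt 5 * sqrt 5 = 5) by (apply sqrt_sqrt; lra).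
  assert (2 < sqrt 5) by nra.
  unfold s5; split; [apply Rinv_0_lt_compat; lra | apply Rinv_lt_contravar; lra].
Qed.

Lemma mp_pos : 0 < mp. Proof. pose proof s5_bounds; unfold mp; lra. Qed.
Lemma mm_pos : 0 < mm. Proof. pose proof s5_bounds; unfold mm; lra. Qed.
Lemma mp_mm : mp + mm = 1. Proof. unfold mp, mm; lra. Qed.
Lemma mp_minus_mm : mp - mm = s5. Proof. unfold mp, mm; field. Qed.
Lemma mp_times_mm : mp * mm = / 5.
Proof.
  unfold mp, mm. replace ((1 + s5) / 2 * ((1 - s5) / 2)) with ((1 - s5 * s5) / 4) by field.
  rewrite s5_sq. field.
Qed.

Lemma rp_sq : rp * rp = mp. Proof. apply sqrt_sqrt; pose proof mp_pos; lra. Qed.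
Lemma rm_sq : rm * rm = mm. Proof. apply sqrt_sqrt; pose proof mm_pos; lra. Qed.
Lemma rp_rm : rp * rm = s5.
Proof.
  pose proof mp_pos; pose proof mm_pos.
  unfold rp, rm. rewrite <- sqrt_mult, mp_times_mm by lra. unfold s5. apply sqrt_inv.
Qed.
Lemma rp2_rm2 : rp * rp + rm * rm = 1. Proof. rewrite rp_sq, rm_sq; apply mp_mm. Qed.

Definition Hstar := hterm mp + hterm mm.

Lemma H2_Hstar : H2 ((1 + / sqrt 5) / 2) = Hstar.
Proof. unfold H2, Hstar. replace (1 - (1 + / sqrt 5) / 2) with mm by (unfold mm, s5; lra). reflexivity. Qed.

Definition cp (c : bool) : R := if c then rp else rm.
Definition cm (c : bool) : R := if c then - rm else rp.
Definition cplus : bool -> Cx := fun c => RtoC (cp c).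
Definition cminus : bool -> Cx := fun c => RtoC (cm c).
Definition cbasis (k : bool) : bool -> Cx := if k then cminus else cplus.

Lemma Omega_GHZ a b c :
  Omega a b c = RtoC (rp * cp a * cp b * cp c + rm * cm a * cm b * cm c).
Proof.
  pose proof rp_sq; pose proof rm_sq; pose proof rp_rm; pose proof mp_mm; pose proof mp_minus_mm.
  destruct a, b, c; simpl; unfold RtoC, Defs.C0; f_equal; fold s5; nra.
Qed.

Lemma cbasis_onb : qubit_ONB cbasis.
Proof.
  pose proof rp2_rm2. intros i j.
  destruct i, j; apply Cx_ext; unfold cbasis, cplus, cminus, cp, cm; cunf; nra.
Qed.

Lemma inner_cbasis_plus k : inner enumB (cbasis k) cplus = if k then Defs.C0 else Defs.C1.
Proof. destruct k; exact (cbasis_onb _ false). Qed.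
Lemma inner_cbasis_minus k : inner enumB (cbasis k) cminus = if k then Defs.C1 else Defs.C0.
Proof. destruct k; exact (cbasis_onb _ true). Qed.

Lemma ov_total f k : qubit_ONB f -> sumR enumB (fun i => ov (f i) (cbasis k)) = 1.
Proof. intros Hf. rewrite qubit_parseval by exact Hf. apply onb_unit, cbasis_onb. Qed.

Lemma ov_split f i : qubit_ONB f -> ov (f i) cplus + ov (f i) cminus = 1.
Proof.
  intros Hf. rewrite (ov_sym _ cplus), (ov_sym _ cminus).
  pose proof (qubit_parseval cbasis (f i) cbasis_onb) as P.
  rewrite onb_unit in P by exact Hf. rewrite sumR_enumB in P. exact P.
Qed.

(** Measuring parties A and B of Ω in the directions [f], [g] leaves party C
    with the (unnormalized) vector [amp2 f g]. *)
Definition amp2 (f g : bool -> Cx) (c : bool) : Cx :=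
  sumC enumB (fun a => sumC enumB (fun b =>
    Cmul (Cmul (Cconj (f a)) (Cconj (g b))) (Omega a b c))).

Definition pr (f g : bool -> Cx) : R := sumR enumB (fun c => Cnorm2 (amp2 f g c)).

Lemma amp2_GHZ f g c : amp2 f g c =
  Cadd (Cmul (Cmul (RtoC rp) (Cmul (inner enumB f cplus) (inner enumB g cplus))) (RtoC (cp c)))
       (Cmul (Cmul (RtoC rm) (Cmul (inner enumB f cminus) (inner enumB g cminus))) (RtoC (cm c))).
Proof.
  unfold amp2. setoid_rewrite Omega_GHZ. unfold cplus, cminus, cp, cm. cxring.
Qed.

Lemma inner_amp2 f g k : inner enumB k (amp2 f g) =
  Cadd (Cmul (RtoC rp) (Cmul (Cmul (inner enumB f cplus) (inner enumB g cplus)) (inner enumB k cplus)))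
       (Cmul (RtoC rm) (Cmul (Cmul (inner enumB f cminus) (inner enumB g cminus)) (inner enumB k cminus))).
Proof.
  unfold inner at 1. setoid_rewrite amp2_GHZ.
  generalize (inner enumB f cplus) (inner enumB g cplus) (inner enumB f cminus) (inner enumB g cminus).
  intros. unfold cplus, cminus. cxring.
Qed.

Lemma pr_formula f g :
  pr f g = mp * (ov f cplus * ov g cplus) + mm * (ov f cminus * ov g cminus).
Proof.
  unfold pr. setoid_rewrite amp2_GHZ.
  set (X := Cmul (RtoC rp) (Cmul (inner enumB f cplus) (inner enumB g cplus))).
  set (Y := Cmul (RtoC rm) (Cmul (inner enumB f cminus) (inner enumB g cminus))).
  transitivity ((rp * rp + rm * rm) * (Cnorm2 X + Cnorm2 Y)).
  - unfold cp, cm. cunf. ring.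
  - rewrite rp2_rm2, Rmult_1_l. unfold X, Y, ov.
    rewrite !Cnorm2_mul, !Cnorm2_RtoC, rp_sq, rm_sq. ring.
Qed.

Lemma weights_total f g k : qubit_ONB f -> (forall i, qubit_ONB (g i)) ->
  sumR enumB (fun i => sumR enumB (fun j =>
    ov (f i) (cbasis k) * ov (g i j) (cbasis k))) = 1.
Proof.
  intros Hf Hg. rewrite <- (ov_total f k Hf). apply sumR_ext; intros i.
  rewrite sumR_scal, ov_total by exact (Hg i). ring.
Qed.

(** Each probability is a
    sub-convex combination of [m+] and [m-] whose weights sum to one. *)
Lemma two_party_entropy_bound (f : bool -> bool -> Cx) (g : bool -> bool -> bool -> Cx) :
  qubit_ONB f -> (forall i, qubit_ONB (g i)) ->
  Hstar <= sumR enumB (fun i => sumR enumB (fun j => hterm (pr (f i) (g i j)))).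
Proof.
  intros Hf Hg.
  set (x := fun i j => ov (f i) cplus * ov (g i j) cplus).
  set (y := fun i j => ov (f i) cminus * ov (g i j) cminus).
  assert (Hterm : forall i j, x i j * hterm mp + y i j * hterm mm <= hterm (pr (f i) (g i j))).
  { intros i j. rewrite pr_formula.
    apply (hterm_conc mp mm (x i j) (y i j) mp_pos mm_pos);
      try (apply Rmult_le_pos; apply ov_nonneg).
    pose proof (ov_split f i Hf). pose proof (ov_split (g i) j (Hg i)).
    pose proof (ov_nonneg (f i) cplus). pose proof (ov_nonneg (f i) cminus).
    pose proof (ov_nonneg (g i j) cplus). pose proof (ov_nonneg (g i j) cminus).
    unfold x, y. nra. }
  eapply Rle_trans; [| apply sumR_le; intros i; apply sumR_le; intros j; apply Hterm].
  rewrite (sumR_ext _ _ (fun i => sumR enumB (fun j => x i j) * hterm mp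
                                + sumR enumB (fun j => y i j) * hterm mm))
    by (intros i; rewrite sumR_add, !sumR_scal_r; reflexivity).
  rewrite sumR_add, !sumR_scal_r.
  pose proof (weights_total f g false Hf Hg) as Wp.
  pose proof (weights_total f g true Hf Hg) as Wm.
  simpl cbasis in Wp, Wm. unfold x, y. rewrite Wp, Wm. unfold Hstar; lra.
Qed.

(** Ω is invariant under every permutation of the parties, so the ordering
    chosen by a scheme is irrelevant. *)
Lemma Omega_sym S y1 y2 y3 : valid_scheme S ->
  Omega (assign S y1 y2 y3 PA) (assign S y1 y2 y3 PB) (assign S y1 y2 y3 PC) = Omega y1 y2 y3.
Proof.
  intros [H12 [H13 [H23 _]]]. unfold assign.
  destruct (ord1 S), (ord2 S), (ord3 S); try congruence; destruct y1, y2, y3; reflexivity.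
Qed.

Lemma scheme_amp_Omega S i1 i2 i3 : valid_scheme S ->
  scheme_amp S Omega i1 i2 i3 = inner enumB (ph3 S i1 i2 i3) (amp2 (ph1 S i1) (ph2 S i1 i2)).
Proof.
  intros HS. unfold scheme_amp. setoid_rewrite (Omega_sym S _ _ _ HS).
  unfold amp2. generalize Omega; intros Om. cxring.
Qed.

(** The last measurement only refines the A,B outcome, so the entropy of
    any scheme dominates that of its first two measurements. *)
Lemma EMB_lower S : valid_scheme S -> Hstar <= scheme_entropy S Omega.
Proof.
  intros HS. pose proof HS as [_ [_ [_ [H1 [H2 H3]]]]].
  eapply Rle_trans; [apply (two_party_entropy_bound (ph1 S) (ph2 S) H1 H2)|].
  unfold scheme_entropy. apply sumR_le; intros i1; apply sumR_le; intros i2.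
  assert (E : pr (ph1 S i1) (ph2 S i1 i2) =
              scheme_prob S Omega i1 i2 false + scheme_prob S Omega i1 i2 true).
  { unfold scheme_prob. rewrite !scheme_amp_Omega by exact HS.
    rewrite <- (sumR_enumB (fun i3 => Cnorm2 (inner enumB (ph3 S i1 i2 i3) _))).
    apply eq_sym, qubit_parseval, H3. }
  rewrite E, sumR_enumB.
  apply hterm_sub; apply Cnorm2_nonneg.
Qed.

Definition S_GHZ : Scheme := mkScheme PA PB PC cbasis (fun _ => cbasis) (fun _ _ => cbasis).

Lemma S_GHZ_valid : valid_scheme S_GHZ.
Proof. repeat split; try discriminate; try apply cbasis_onb; intros; apply cbasis_onb. Qed.

Definition ghz_weight (k : Idx3) : R :=
  match k with (false, false, false) => mp | (true, true, true) => mm | _ => 0 end.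

Lemma inner_amp2_cbasis i1 i2 i3 :
  Cnorm2 (inner enumB (cbasis i3) (amp2 (cbasis i1) (cbasis i2))) = ghz_weight (i1, i2, i3).
Proof.
  rewrite inner_amp2, !inner_cbasis_plus, !inner_cbasis_minus.
  destruct i1, i2, i3; simpl ghz_weight; rewrite <- ?rp_sq, <- ?rm_sq; cunf; ring.
Qed.

Lemma hterm_ghz_total :
  sumR enum3 (fun k => hterm (ghz_weight k)) = Hstar.
Proof. simpl. rewrite hterm_0. unfold Hstar. ring. Qed.

Lemma S_GHZ_entropy : scheme_entropy S_GHZ Omega = Hstar.
Proof.
  rewrite <- hterm_ghz_total, sumR_enum3. unfold scheme_entropy, scheme_prob.
  apply sumR_ext; intros i1; apply sumR_ext; intros i2; apply sumR_ext; intros i3.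
  rewrite scheme_amp_Omega by exact S_GHZ_valid. apply f_equal, inner_amp2_cbasis.
Qed.

Lemma IsEMB_Omega : IsEMB Omega Hstar.
Proof.
  split.
  - exists S_GHZ. split; [exact S_GHZ_valid | exact S_GHZ_entropy].
  - exact EMB_lower.
Qed.

(** The non-adaptive quantity is the same two-party bound, attained at the
    same basis. *)
Lemma pr_cbasis l m :
  pr (cbasis l) (cbasis m) = if l then (if m then mm else 0) else (if m then 0 else mp).
Proof.
  rewrite pr_formula. unfold ov. rewrite !inner_cbasis_plus, !inner_cbasis_minus.
  destruct l, m; cunf; ring.
Qed.

Lemma IsEHmin_Omega : IsEHmin Omega Hstar.
Proof.
  split.
  - exists cbasis, cbasis. split; [exact cbasis_onb|]. split; [exact cbasis_onb|].
    change (sumR enumB (fun l => sumR enumB (fun m => hterm (pr (cbasis l) (cbasis m))))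
            = Hstar).
    setoid_rewrite pr_cbasis. simpl. rewrite hterm_0. unfold Hstar. ring.
  - intros al be Ha Hb. exact (two_party_entropy_bound al (fun _ => be) Ha (fun _ => Hb)).
Qed.

Definition rhoC_Omega (i j : bool) : R :=
  if i then (if j then 3/5 else 1/5) else (if j then 1/5 else 2/5).

Lemma rhoC_entries i j : rhoC Omega i j = RtoC (rhoC_Omega i j).
Proof.
  pose proof s5_sq. destruct i, j; apply Cx_ext; cunf; unfold Defs.C0; simpl; fold s5; lra.
Qed.

Definition lamC (k : bool) : R := if k then mm else mp.

Lemma rhoC_spectral : spectral2 (rhoC Omega) cbasis lamC.
Proof.
  split; [exact cbasis_onb|]. intros i j. rewrite rhoC_entries.
  pose proof rp_sq; pose proof rm_sq; pose proof rp_rm; pose proof mp_times_mm;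
  pose proof mp_mm; pose proof mp_minus_mm; pose proof s5_sq.
  destruct i, j; apply Cx_ext; unfold rhoC_Omega, lamC, cbasis, cplus, cminus, cp, cm; cunf; nra.
Qed.

Lemma rhoC_eigenvalues e lam : spectral2 (rhoC Omega) e lam ->
  (lam false = mp /\ lam true = mm) \/ (lam false = mm /\ lam true = mp).
Proof.
  intros Hs. destruct (spectral2_power_sums _ _ _ Hs) as [T Q].
  setoid_rewrite rhoC_entries in T. setoid_rewrite rhoC_entries in Q.
  cunf. unfold rhoC_Omega in T, Q.
  assert (R0 : (lam false - mp) * (lam false - mm) = 0).
  { pose proof mp_mm; pose proof mp_times_mm.
    replace ((lam false - mp) * (lam false - mm))
      with (lam false * lam false - lam false * (mp + mm) + mp * mm) by ring.
    nra. }
  pose proof mp_mm.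
  destruct (Rmult_integral _ _ R0); [left | right]; split; lra.
Qed.

Lemma IsVN_Omega : IsVNEntropyC Omega Hstar.
Proof.
  split.
  - exists cbasis, lamC. exact rhoC_spectral.
  - intros e lam Hs. rewrite sumR_enumB. unfold Hstar.
    destruct (rhoC_eigenvalues e lam Hs) as [[-> ->] | [-> ->]]; ring.
Qed.

Definition slice_weight (u : bool -> Cx) : R := mp * ov u cplus + mm * ov u cminus.

Lemma slice_weight_Omega u :
  sumR enumB (fun a => sumR enumB (fun b => Cnorm2 (inner enumB u (fun c => Omega a b c)))) =
  slice_weight u.
Proof.
  set (X := Cmul (RtoC rp) (inner enumB u cplus)).
  set (Y := Cmul (RtoC rm) (inner enumB u cminus)).
  rewrite (sumR_ext _ _ (fun a => sumR enumB (fun b =>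
     Cnorm2 (Cadd (Cmul X (RtoC (cp a * cp b))) (Cmul Y (RtoC (cm a * cm b))))))).
  - transitivity ((rp * rp + rm * rm) * (rp * rp + rm * rm) * (Cnorm2 X + Cnorm2 Y)).
    + unfold cp, cm. cunf. ring.
    + rewrite rp2_rm2. unfold X, Y, slice_weight, ov.
      rewrite !Cnorm2_mul, !Cnorm2_RtoC, rp_sq, rm_sq. ring.
  - intros a; apply sumR_ext; intros b. f_equal. unfold inner. setoid_rewrite Omega_GHZ.
    unfold X, Y, cplus, cminus. generalize (cp a) (cp b) (cm a) (cm b). intros. unfold cp, cm. cxring.
Qed.

(** For a qubit basis [c], the weights [slice_weight (c j)] form a
    probability vector that is majorized by [(m+, m-)], hence has entropy at
    least [H2(m+)]. *)
Lemma slice_weight_total c : qubit_ONB c -> sumR enumB (fun j => slice_weight (c j)) = 1.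
Proof.
  intros Hc. unfold slice_weight. rewrite sumR_add, !sumR_scal.
  pose proof (ov_total c false Hc) as P. pose proof (ov_total c true Hc) as M.
  simpl cbasis in P, M. rewrite P, M. pose proof mp_mm. lra.
Qed.

Lemma slice_weight_entropy c : qubit_ONB c ->
  hl mp + hl mm <= sumR enumB (fun j => hl (slice_weight (c j))).
Proof.
  intros Hc.
  eapply Rle_trans; [| apply sumR_le; intros j; apply hl_conc;
    [exact mp_pos | exact mm_pos | apply ov_nonneg | apply ov_nonneg | pose proof (ov_split c j Hc); lra]].
  rewrite sumR_add, !sumR_scal_r. pose proof (ov_total c false Hc) as P. pose proof (ov_total c true Hc) as M.
  simpl cbasis in P, M. rewrite P, M. lra.
Qed.

Lemma variational_split (v psi : Idx3 -> Cx) (M : Mat2) t :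
  2 * re (inner enum3 v psi) - t * sumR enum3 (fun x => Cnorm2 (v x))
    - sumR enumB (fun a => sumR enumB (fun b => qform enumB M (fun c => v (a, b, c)))) =
  sumR enumB (fun a => sumR enumB (fun b =>
    2 * re (inner enumB (fun c => v (a, b, c)) (fun c => psi (a, b, c)))
    - t * sumR enumB (fun c => Cnorm2 (v (a, b, c))) - qform enumB M (fun c => v (a, b, c)))).
Proof.
  unfold inner. rewrite sumC_enum3, sumR_enum3, !sumR_enumB, !sumC_enumB. simpl. ring.
Qed.

(** Resolvent comparison: with [sigma <= I_AB (x) sigma_C] and the
    variational principle,
    [<Ω|(I (x) sigma_C + t)^-1|Ω> <= <Ω|(sigma + t)^-1|Ω>] for all [t > 0]. *)
Lemma resolvent_comparison (s : Mat8) e lam (L : list SepTerm) c nu t :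
  complete enum3 eqb3 e -> decomp enum3 s e lam -> (forall k, 0 <= lam k) ->
  Forall sep_weight_ok L ->
  (forall x y, s x y = sumC L (fun t => Cmul (RtoC (fst t)) (sep_matrix t x y))) ->
  qubit_ONB c -> decomp enumB (marginalC L) c nu -> (forall j, 0 <= nu j) -> 0 < t ->
  sumR enumB (fun j => slice_weight (c j) / (nu j + t)) <=
  sumR enum3 (fun k => Cnorm2 (inner enum3 (e k) (vec3 Omega)) / (lam k + t)).
Proof.
  intros He Hs Hlam HL Hsep Hc Hnu Hnu0 Ht.
  set (V := fun x : Idx3 => match x with (a, b, z) =>
              resolvent_vec c nu t (fun z' => Omega a b z') z end).
  pose proof (variational_bound enum3 eqb3 e s lam (vec3 Omega) V t
                enum3_enumerates He Hs Hlam Ht) as Bound.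
  rewrite (qform_ext enum3 s _ V Hsep) in Bound.
  pose proof (separable_bounds L V HL) as [_ Up].
  enough (Blocks : 2 * re (inner enum3 V (vec3 Omega)) - t * sumR enum3 (fun x => Cnorm2 (V x))
            - sumR enumB (fun a => sumR enumB (fun b => qform enumB (marginalC L) (fun z => V (a, b, z))))
            = sumR enumB (fun j => slice_weight (c j) / (nu j + t))) by lra.
  rewrite variational_split.
  rewrite (sumR_ext _ _ (fun a => sumR enumB (fun b => sumR enumB (fun j =>
              Cnorm2 (inner enumB (c j) (fun z => Omega a b z)) / (nu j + t))))).
  - transitivity (sumR enumB (fun j => sumR enumB (fun a => sumR enumB (fun b =>
                    Cnorm2 (inner enumB (c j) (fun z => Omega a b z)))) / (nu j + t))).
    + rewrite !sumR_enumB. unfold Rdiv. ring.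
    + apply sumR_ext; intros j. rewrite slice_weight_Omega. reflexivity.
  - intros a. apply sumR_ext; intros b.
    exact (variational_attained (marginalC L) c nu (fun z => Omega a b z) t Hc Hnu Hnu0 Ht).
Qed.

Lemma Omega_normalized : sumR enum3 (fun x => Cnorm2 (vec3 Omega x)) = 1.
Proof. pose proof s5_sq. simpl. unfold Cnorm2, RtoC, Defs.C0; simpl. fold s5. lra. Qed.

Lemma separable_spectrum_nonneg s e lam : fully_separable s -> spectral8 s e lam ->
  forall k, 0 <= lam k.
Proof.
  intros [L [HF [_ HL]]] [He Hs] k.
  rewrite <- (qform_eigen enum3 eqb3 s e lam k enum3_enumerates He Hs).
  rewrite (qform_ext enum3 s _ _ (fun x y => eq_trans (HL x y) (sep_sum_form L x y))).
  apply (separable_bounds L (e k) HF).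
Qed.

Lemma gibbs_shifted (p nu : bool -> R) t0 :
  (forall j, 0 <= p j) -> (forall j, 0 <= nu j) -> sumR enumB p = 1 -> nu false + nu true = 1 ->
  0 < t0 -> sumR enumB (fun j => p j * ln (nu j + t0)) <= - sumR enumB (fun j => hl (p j)) + 2 * t0.
Proof.
  intros Hp Hnu Sp Snu Ht0. rewrite !sumR_enumB. rewrite sumR_enumB in Sp.
  pose proof (gibbs_term (p false) (nu false + t0) (Hp false) ltac:(pose proof (Hnu false); lra)).
  pose proof (gibbs_term (p true) (nu true + t0) (Hp true) ltac:(pose proof (Hnu true); lra)).
  lra.
Qed.

Lemma log_sum_drop_shift {I} (l : list I) (o lam : I -> R) t0 :
  (forall k, 0 <= o k) -> (forall k, o k <> 0 -> 0 < lam k) -> 0 < t0 ->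
  - sumR l (fun k => o k * ln (lam k + t0)) <=
  sumR l (fun k => if Req_dec_T (o k) 0 then 0 else - o k * ln (lam k)).
Proof.
  intros Ho Hfin Ht0. rewrite <- sumR_opp. apply sumR_le; intros k.
  destruct (Req_dec_T (o k) 0) as [E|E]; [rewrite E; lra|].
  pose proof (Hfin k E). pose proof (Ho k).
  pose proof (ln_le_mono (lam k) (lam k + t0) ltac:(assumption) ltac:(lra)). nra.
Qed.

(** Relative entropy lower bound, in natural logarithms: for every [t0 > 0],
    [-sum_k o_k ln(lam_k + t0) >= -sum_j p_j ln(nu_j + t0) >= H(p) - 2 t0
    >= H2(m+) - 2 t0], with [o_k = |<e_k|Ω>|^2] and [p_j] the slice weights of
    the eigenbasis of [sigma_C]. *)
Lemma relent_lower_nat s e lam : fully_separable s -> spectral8 s e lam -> finite_relent Omega e lam ->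
  hl mp + hl mm <= sumR enum3 (fun k => if Req_dec_T (ovl Omega e k) 0 then 0
                                         else - ovl Omega e k * ln (lam k)).
Proof.
  intros Hsep8 Hsp Hfin. pose proof (separable_spectrum_nonneg s e lam Hsep8 Hsp) as Hlam.
  destruct Hsep8 as [L [HF [HW HL]]]. destruct Hsp as [He Hs].
  pose proof (orthonormal_complete enum3 eqb3 e enum3_enumerates He) as Hc.
  assert (Hsep : forall x y, s x y = sumC L (fun t => Cmul (RtoC (fst t)) (sep_matrix t x y)))
    by (intros; rewrite HL; apply sep_sum_form).
  destruct (density2_spectral _ (marginalC_density L HF HW)) as [c [nu [Hc2 [Hdec [Hnu Snu]]]]].
  set (o := fun k => ovl Omega e k). set (p := fun j => slice_weight (c j)).
  assert (Ho : forall k, 0 <= o k) by (intros; apply Cnorm2_nonneg).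
  assert (Hp : forall j, 0 <= p j).
  { intros j. unfold p, slice_weight. pose proof (ov_nonneg (c j) cplus).
    pose proof (ov_nonneg (c j) cminus). pose proof mp_pos; pose proof mm_pos. nra. }
  assert (So : sumR enum3 o = 1).
  { unfold o, ovl. rewrite (parseval_norm enum3 eqb3 e enum3_enumerates Hc). apply Omega_normalized. }
  assert (Sp : sumR enumB p = 1) by exact (slice_weight_total c Hc2).
  apply Rle_plus_epsilon; intros eps Heps.
  assert (Ht0 : 0 < eps / 2) by lra.
  pose proof (Calculus.log_comparison enum3 enumB o lam p nu Ho Hlam Hp Hnu So Sp
    (fun t Ht => resolvent_comparison s e lam L c nu t Hc Hs Hlam HF Hsep Hc2 Hdec Hnu Ht) _ Ht0)
    as Cmp.
  pose proof (gibbs_shifted p nu _ Hp Hnu Sp Snu Ht0) as Gibbs.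
  pose proof (slice_weight_entropy c Hc2) as Major.
  pose proof (log_sum_drop_shift enum3 o lam _ Ho Hfin Ht0) as Shift.
  unfold o, p in *. cbv beta in *. lra.
Qed.

Lemma ER_lower s e lam : fully_separable s -> spectral8 s e lam -> finite_relent Omega e lam ->
  Hstar <= relent_val Omega e lam.
Proof.
  intros Hs Hsp Hfin. pose proof (relent_lower_nat s e lam Hs Hsp Hfin) as N.
  assert (Rel : relent_val Omega e lam = sumR enum3 (fun k => if Req_dec_T (ovl Omega e k) 0 then 0
                                         else - ovl Omega e k * ln (lam k)) / ln 2).
  { unfold relent_val, Rdiv. rewrite <- sumR_scal_r. apply sumR_ext; intros k.
    destruct (Req_dec_T (ovl Omega e k) 0); [ring|]. unfold log2, Rdiv. ring. }
  rewrite Rel. unfold Hstar. rewrite !hterm_hl. pose proof ln2_pos.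
  unfold Rdiv. rewrite <- Rmult_plus_distr_r.
  apply Rmult_le_compat_r; [left; apply Rinv_0_lt_compat |]; lra.
Qed.

(** The optimal separable state [sigma* = m+ |c+c+c+><c+c+c+| + m- |c-c-c-><c-c-c-|]:
    diagonal in the product basis, with eigenvalues equal to Ω's weights. *)
Definition ghz_basis : Idx3 -> Idx3 -> Cx := tensor3 cbasis cbasis cbasis.

Definition sigma_star : Mat8 := fun x y =>
  sumC enum3 (fun k => Cmul (RtoC (ghz_weight k)) (Cmul (ghz_basis k x) (Cconj (ghz_basis k y)))).

Definition proj (k : bool) : Mat2 := fun i j => Cmul (cbasis k i) (Cconj (cbasis k j)).

Lemma proj_density k : density2 (proj k).
Proof.
  split; [| split].
  - intros i j; unfold proj; cxring.
  - intros v. transitivity (Cnorm2 (inner enumB (cbasis k) v)); [apply Cnorm2_nonneg|].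
    right. unfold proj; cunf; ring.
  - pose proof rp2_rm2. destruct k; unfold proj, cbasis, cplus, cminus, cp, cm; apply Cx_ext; cunf; lra.
Qed.

Lemma sigma_star_separable : fully_separable sigma_star.
Proof.
  exists [(mp, (proj false, proj false, proj false)); (mm, (proj true, proj true, proj true))].
  split; [| split].
  - pose proof mp_pos; pose proof mm_pos.
    repeat apply Forall_cons; try apply Forall_nil;
      (split; [lra | repeat split; apply proj_density]).
  - simpl. rewrite Rplus_0_r. apply mp_mm.
  - intros [[a b] c] [[a' b'] c']. unfold sigma_star. rewrite sumC_enum3.
    unfold ghz_basis, prod_state, proj. simpl. unfold cplus, cminus.
    generalize (cp a) (cp b) (cp c) (cp a') (cp b') (cp c') (cm a) (cm b) (cm c) (cm a') (cm b') (cm c').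
    intros. cxring.
Qed.

Lemma ovl_ghz_basis k : ovl Omega ghz_basis k = ghz_weight k.
Proof.
  destruct k as [[k1 k2] k3]. unfold ovl, ghz_basis. rewrite <- inner_amp2_cbasis.
  f_equal. rewrite inner_tensor3. unfold inner, amp2. cxring.
Qed.

Lemma IsER_Omega : IsER Omega Hstar.
Proof.
  split.
  - exists sigma_star, ghz_basis, ghz_weight.
    split; [exact sigma_star_separable|].
    split; [split; [apply tensor3_onb; exact cbasis_onb | intros; reflexivity]|].
    split.
    + intros k H. rewrite ovl_ghz_basis in H.
      destruct k as [[[] []] []]; simpl in *; try (exfalso; apply H; reflexivity);
        [apply mm_pos | apply mp_pos].
    + rewrite <- hterm_ghz_total. unfold relent_val. apply sumR_ext; intros k.
      rewrite ovl_ghz_basis. reflexivity.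
  - exact ER_lower.
Qed.

(** Numerical value of [H2(m+)], from certified enclosures of [ln 2],
    [ln(5/4)] and [ln m+], each obtained from the atanh series at [z] with
    [r = (1+z)/(1-z)]. *)

Lemma ln_enclosure z r : 0 <= z < 1 -> r = (1 + z) / (1 - z) ->
  Calculus.atanh_poly z <= ln r <= Calculus.atanh_poly z + 2 * z^13 / (13 * (1 - z^2)).
Proof.
  intros Hz ->. rewrite ln_div by lra.
  split; [apply Calculus.atanh_poly_lower | apply Calculus.atanh_poly_upper]; lra.
Qed.

Lemma ln2_bounds : 6931470737/10000000000 <= ln 2 <= 6931471824/10000000000.
Proof.
  destruct (ln_enclosure (1/3) 2) as [A B]; [lra | field |].
  unfold Calculus.atanh_poly in *. split; lra.
Qed.

Lemma ln54_bounds : 2231435513/10000000000 <= ln (5/4) <= 2231435514/10000000000.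
Proof.
  destruct (ln_enclosure (1/9) (5/4)) as [A B]; [lra | field |].
  unfold Calculus.atanh_poly in *. split; lra.
Qed.

Lemma s5_enclosure : 4472135954/10000000000 < s5 < 4472135956/10000000000.
Proof. pose proof s5_sq; pose proof s5_bounds. split; nra. Qed.

Lemma ln_mp_bounds : - (3235071313/10000000000) <= ln mp <= - (323507131/1000000000).
Proof.
  pose proof s5_enclosure. split.
  - destruct (ln_enclosure (2763932023/17236067977) (/ (7236067977/10000000000))) as [_ B];
      [lra | field |].
    rewrite ln_Rinv in B by lra. unfold Calculus.atanh_poly in B.
    apply Rle_trans with (ln (7236067977/10000000000)); [lra|].
    apply ln_le_mono; unfold mp; lra.
  - destruct (ln_enclosure (1381966011/8618033989) (/ (3618033989/5000000000))) as [A _];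
      [lra | field |].
    rewrite ln_Rinv in A by lra. unfold Calculus.atanh_poly in A.
    apply Rle_trans with (ln (3618033989/5000000000)); [|lra].
    apply ln_le_mono; [apply mp_pos | unfold mp; lra].
Qed.

(** Closed form: [H2(m+) = (- s5 ln m+ + m- ln 5) / ln 2], using [m+ m- = 1/5]. *)
Lemma Hstar_closed_form : Hstar = (- s5 * ln mp + mm * (ln (5/4) + 2 * ln 2)) / ln 2.
Proof.
  pose proof mp_pos; pose proof mm_pos; pose proof ln2_pos.
  assert (L5 : ln 5 = ln (5/4) + 2 * ln 2).
  { replace 5 with (5/4 * (2 * 2)) at 1 by field. rewrite !ln_mult by lra. ring. }
  assert (Lmm : ln mm = - (ln 5 + ln mp)).
  { replace mm with (/ (5 * mp)) by (pose proof mp_times_mm; field_simplify_eq; nra).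
    rewrite ln_Rinv, ln_mult by lra. ring. }
  unfold Hstar. rewrite !hterm_hl, !hl_pos by lra.
  rewrite Lmm, <- L5, <- mp_minus_mm. field. lra.
Qed.

Lemma Hstar_numeric : Rabs (Hstar - 8505 / 10000) < 5 / 100000.
Proof.
  rewrite Hstar_closed_form.
  pose proof ln2_bounds; pose proof ln54_bounds; pose proof ln_mp_bounds; pose proof s5_enclosure.
  set (N := - s5 * ln mp + mm * (ln (5/4) + 2 * ln 2)).
  assert (N1 : 85045/100000 * ln 2 < N) by (unfold N, mm; nra).
  assert (N2 : N < 85055/100000 * ln 2) by (unfold N, mm; nra).
  apply Rabs_def1; apply (Rmult_lt_reg_r (ln 2)); try lra; unfold Rdiv; field_simplify; lra.
Qed.

Theorem mainTheorem5 :
  IsEMB Omega (H2 ((1 + / sqrt 5) / 2)) /\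
  IsER Omega (H2 ((1 + / sqrt 5) / 2)) /\
  IsEHmin Omega (H2 ((1 + / sqrt 5) / 2)) /\
  IsVNEntropyC Omega (H2 ((1 + / sqrt 5) / 2)) /\
  Rabs (H2 ((1 + / sqrt 5) / 2) - 8505 / 10000) < 5 / 100000.
Proof.
  rewrite H2_Hstar.
  split; [exact IsEMB_Omega|].
  split; [exact IsER_Omega|].
  split; [exact IsEHmin_Omega|].
  split; [exact IsVN_Omega|].
  exact Hstar_numeric.
Qed.
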